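(* Let $v$ be a typical weight and let $X$ be an initial space such that for every $f\in X$ and $0\le r<1$ the function $f_r(z)=f(rz)$ is in $X$ and $\sup_{0\le r<1}\|f_r\|_X\le C\|f\|_X$ for a constant $C$ independent of $f$. Let $T$ be an intrinsic operator on $\mathcal{H}(\mathbb{D})$ such that $T:X\to\mathcal{B}_v$ is bounded and $Tf_r\in\mathcal{B}_{v,0}$ for all $f\in X$, $0\le r<1$. Then the following are equivalent: (i) $T:X\to\mathcal{B}_v$ is compact; (ii) $T:X\to\mathcal{B}_{v,0}$ is compact; (iii) $\lim_{|z|\to1}v(z)\|T^*K_{z,1}^{\mathcal{B}}\|=0$.
   Context: $\mathcal{H}(\mathbb{D})$ is the space of holomorphic functions on the unit disk $\mathbb{D}$ with the topology $\tau_{uc}$ of uniform convergence on compact subsets. A linear operator $T$ on $\mathcal{H}(\mathbb{D})$ is intrinsic if it maps $\tau_{uc}$-convergent sequences to $\tau_{uc}$-convergent sequences. An initial space is a Banach space $X\subset\mathcal{H}(\mathbb{D})$ containing the polynomials such that every sequence in the closed unit ball of $X$ has a subsequence converging in $\tau_{uc}$ to some function in $X$. A typical weight is a continuous radial $v:\mathbb{D}\to(0,1]$, non-increasing in $|z|$, with $v(z)\to0$ as $|z|\to1$. $\mathcal{B}_v=\{f:\sup_z v(z)|f'(z)|<\infty\}$ with norm $|f(0)|+\sup_z v(z)|f'(z)|$, $\mathcal{B}_{v,0}=\{f:\lim_{|z|\to1}v(z)|f'(z)|=0\}$. $K_{z,1}^{\mathcal{B}}$ is the derivative point evaluation $g\mapsto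 g'(z)$ on $\mathcal{B}_v$ and $T^*:\mathcal{B}_v^*\to X^*$ the adjoint of $T:X\to\mathcal{B}_v$. *)

From Stdlib Require Import Reals Lra ClassicalEpsilon.
From Coquelicot Require Import Coquelicot.
Open Scope R_scope.

Definition Dsk : Type := {z : C | Cmod z < 1}.

Lemma Cmod0_lt1 : Cmod (RtoC 0) < 1.
Proof. rewrite Cmod_0. lra. Qed.

Definition D0 : Dsk := exist _ (RtoC 0) Cmod0_lt1.

(* Functions on the disk are  Dsk -> C.  [ext f] extends f by 0 outside D
   (irrelevant for derivatives since D is open). *)
Definition ext (f : Dsk -> C) (w : C) : C :=
  match Rlt_dec (Cmod w) 1 with
  | left H => f (exist _ w H)
  | right _ => RtoC 0
  end.

Definition holo (f : Dsk -> C) : Prop :=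
  forall z : Dsk, @ex_derive C_AbsRing C_NormedModule (ext f) (proj1_sig z).

Definition hder (f : Dsk -> C) (z : Dsk) : C :=
  epsilon (inhabits (RtoC 0))
    (fun l => @is_derive C_AbsRing C_NormedModule (ext f) (proj1_sig z) l).

Definition fadd (f g : Dsk -> C) : Dsk -> C := fun z => Cplus (f z) (g z).
Definition fscal (a : C) (f : Dsk -> C) : Dsk -> C := fun z => Cmult a (f z).
Definition fsub (f g : Dsk -> C) : Dsk -> C := fun z => Cminus (f z) (g z).
Definition fzero : Dsk -> C := fun _ => RtoC 0.

Fixpoint peval (l : list C) (w : C) : C :=
  match l with
  | nil => RtoC 0
  | cons a l' => Cplus a (Cmult w (peval l' w))
  end.
Definition poly_fun (l : list C) : Dsk -> C := fun z => peval l (proj1_sig z).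

Definition dil (r : R) (f : Dsk -> C) : Dsk -> C :=
  fun z => ext f (Cmult (RtoC r) (proj1_sig z)).

(* convergence in tau_uc: uniform convergence on every compact subset of D,
   i.e. on every closed disk |z| <= r with r < 1 *)
Definition uc_conv (fn : nat -> Dsk -> C) (f : Dsk -> C) : Prop :=
  forall r, 0 <= r < 1 -> forall eps, 0 < eps -> exists N : nat,
    forall n, (N <= n)%nat -> forall z : Dsk, Cmod (proj1_sig z) <= r ->
      Cmod (Cminus (fn n z) (f z)) < eps.

Definition strict_incr (phi : nat -> nat) : Prop :=
  forall n, (phi n < phi (S n))%nat.

Definition intrinsic (T : (Dsk -> C) -> (Dsk -> C)) : Prop :=
  (forall f, holo f -> holo (T f)) /\
  (forall f g, holo f -> holo g -> T (fadd f g) = fadd (T f) (T g)) /\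
  (forall a f, holo f -> T (fscal a f) = fscal a (T f)) /\
  (forall fn f, (forall n, holo (fn n)) -> holo f -> uc_conv fn f ->
     exists g, uc_conv (fun n => T (fn n)) g).

Record banach_subspace (X : (Dsk -> C) -> Prop) (nX : (Dsk -> C) -> R) : Prop := {
  bs_holo : forall f, X f -> holo f;
  bs_zero : X fzero;
  bs_add : forall f g, X f -> X g -> X (fadd f g);
  bs_scal : forall a f, X f -> X (fscal a f);
  bs_norm_ge0 : forall f, X f -> 0 <= nX f;
  bs_norm_eq0 : forall f, X f -> nX f = 0 -> f = fzero;
  bs_norm_scal : forall a f, X f -> nX (fscal a f) = Cmod a * nX f;
  bs_norm_tri : forall f g, X f -> X g -> nX (fadd f g) <= nX f + nX g;
  bs_complete : forall fn : nat -> Dsk -> C, (forall n, X (fn n)) ->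
    (forall eps, 0 < eps -> exists N : nat, forall m n, (N <= m)%nat -> (N <= n)%nat ->
        nX (fsub (fn m) (fn n)) < eps) ->
    exists f, X f /\ (forall eps, 0 < eps -> exists N : nat, forall n, (N <= n)%nat ->
        nX (fsub (fn n) f) < eps)
}.

Definition initial_space (X : (Dsk -> C) -> Prop) (nX : (Dsk -> C) -> R) : Prop :=
  banach_subspace X nX /\
  (forall l : list C, X (poly_fun l)) /\
  (forall fn : nat -> Dsk -> C, (forall n, X (fn n) /\ nX (fn n) <= 1) ->
     exists phi f, strict_incr phi /\ X f /\ uc_conv (fun n => fn (phi n)) f).

Definition typical_weight (v : Dsk -> R) : Prop :=
  (forall z : Dsk, forall eps, 0 < eps -> exists delta, 0 < delta /\
     forall w : Dsk, Cmod (Cminus (proj1_sig w) (proj1_sig z)) < delta ->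
       Rabs (v w - v z) < eps) /\
  (forall z w : Dsk, Cmod (proj1_sig z) = Cmod (proj1_sig w) -> v z = v w) /\
  (forall z : Dsk, 0 < v z <= 1) /\
  (forall z w : Dsk, Cmod (proj1_sig z) <= Cmod (proj1_sig w) -> v w <= v z) /\
  (forall eps, 0 < eps -> exists rho, rho < 1 /\
     forall z : Dsk, rho < Cmod (proj1_sig z) -> v z < eps).

Definition Bv (v : Dsk -> R) (f : Dsk -> C) : Prop :=
  holo f /\ exists M, forall z : Dsk, v z * Cmod (hder f z) <= M.

Definition Bv0 (v : Dsk -> R) (f : Dsk -> C) : Prop :=
  Bv v f /\ forall eps, 0 < eps -> exists rho, rho < 1 /\
     forall z : Dsk, rho < Cmod (proj1_sig z) -> v z * Cmod (hder f z) < eps.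

Definition Bv_norm (v : Dsk -> R) (f : Dsk -> C) : R :=
  Cmod (f D0) + real (Lub_Rbar (fun t => exists z : Dsk, t = v z * Cmod (hder f z))).

Definition bounded_op (X : (Dsk -> C) -> Prop) (nX : (Dsk -> C) -> R) (v : Dsk -> R)
    (T : (Dsk -> C) -> (Dsk -> C)) : Prop :=
  (forall f, X f -> Bv v (T f)) /\
  exists M, forall f, X f -> Bv_norm v (T f) <= M * nX f.

Definition compact_op (X : (Dsk -> C) -> Prop) (nX : (Dsk -> C) -> R) (v : Dsk -> R)
    (Y : (Dsk -> C) -> Prop) (T : (Dsk -> C) -> (Dsk -> C)) : Prop :=
  (forall f, X f -> Y (T f)) /\
  forall fn : nat -> Dsk -> C, (forall n, X (fn n)) ->
    (exists M, forall n, nX (fn n) <= M) ->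
    exists phi g, strict_incr phi /\ Y g /\
      forall eps, 0 < eps -> exists N : nat, forall n, (N <= n)%nat ->
        Bv_norm v (fsub (T (fn (phi n))) g) < eps.

(* || T^* K^B_{z,1} ||_{X^*} = sup { |(Tf)'(z)| : f in X, ||f||_X <= 1 } *)
Definition adj_Kder_norm (X : (Dsk -> C) -> Prop) (nX : (Dsk -> C) -> R)
    (T : (Dsk -> C) -> (Dsk -> C)) (z : Dsk) : R :=
  real (Lub_Rbar (fun t => exists f, X f /\ nX f <= 1 /\ t = Cmod (hder (T f) z))).

(* (i) => (ii): for f in X, the T f_r lie in B_v0 and f_r -> f locally uniformly, so T f_r -> T f
   locally uniformly since T is intrinsic; by compactness a subsequence converges in B_v, and as B_v0
   is closed in B_v and the two limits have the same derivative, T f lies in B_v0.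
   (ii) => (iii): ||T^* K_z|| is the supremum of |(T f)'(z)| over the unit ball of X, and compactness
   makes v(z) |(T f)'(z)| small near the boundary uniformly over that ball.
   (iii) => (ii): a bounded sequence has a subsequence f_n -> f locally uniformly; then T (f_n - f) -> 0
   locally uniformly, so its derivatives tend to 0 uniformly on compact sets, while near the boundary
   v(z) |(T (f_n - f))'(z)| <= v(z) ||T^* K_z|| sup_n ||f_n - f||.
   The convergence of derivatives is the Weierstrass theorem, which follows from the Cauchy estimate
   |F'(z)| <= 4 M / a on squares of half-side a; that estimate is derived from Goursat's theorem for
   rectangles, proved by the classical quadrisection argument. *)

From Stdlib Require Import Reals Lra Lia ClassicalEpsilon ProofIrrelevance FunctionalExtensionality.
From Coquelicot Require Import Coquelicot.
Open Scope R_scope.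

(** * Continuity and derivatives in Caratheodory form *)

Lemma Cmod_sub_sym (a b : C) : Cmod (a - b) = Cmod (b - a).
Proof. replace (a - b)%C with (- (b - a))%C by ring. apply Cmod_opp. Qed.

Lemma Cmod_sub_triangle (a b c : C) : Cmod (a - c) <= Cmod (a - b) + Cmod (b - c).
Proof. replace (a - c)%C with ((a - b) + (b - c))%C by ring. apply Cmod_triangle. Qed.

Lemma Cmod_le_sub (a b : C) : Cmod a <= Cmod b + Cmod (a - b).
Proof. replace a with (b + (a - b))%C at 1 by ring. apply Cmod_triangle. Qed.

Lemma im_le_Cmod (z : C) : Rabs (snd z) <= Cmod z.
Proof. pose proof (Rmax_Cmod z). pose proof (Rmax_r (Rabs (fst z)) (Rabs (snd z))). lra. Qed.

Lemma Cmod_le_re_im (z : C) : Cmod z <= Rabs (fst z) + Rabs (snd z).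
Proof.
  destruct z as [x y]. unfold Cmod. simpl.
  pose proof (Rabs_pos x); pose proof (Rabs_pos y).
  rewrite <- (sqrt_square (Rabs x + Rabs y)) by lra.
  apply sqrt_le_1_alt.
  assert (x * x = Rabs x * Rabs x) by (rewrite <- Rabs_mult, Rabs_pos_eq; nra).
  assert (y * y = Rabs y * Rabs y) by (rewrite <- Rabs_mult, Rabs_pos_eq; nra).
  nra.
Qed.

Lemma Cmod_small_eq0 (x : C) : (forall e, 0 < e -> Cmod x < e) -> x = RtoC 0.
Proof.
  intros H. apply Cmod_eq_0.
  destruct (Rle_lt_or_eq_dec 0 (Cmod x) (Cmod_ge_0 _)) as [Hp|E]; auto.
  specialize (H (Cmod x) Hp). lra.
Qed.

Lemma Cmult_neq0 (u v : C) : u <> RtoC 0 -> v <> RtoC 0 -> (u * v)%C <> RtoC 0.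
Proof.
  intros Hu Hv E. apply (f_equal Cmod) in E. rewrite Cmod_mult, Cmod_0 in E.
  apply Cmod_gt_0 in Hu. apply Cmod_gt_0 in Hv. nra.
Qed.

Definition ccontinuous (F : C -> C) (w : C) : Prop :=
  forall eps, 0 < eps -> exists d, 0 < d /\
    forall u, Cmod (u - w) < d -> Cmod (F u - F w) < eps.

Lemma ccontinuous_const (c w : C) : ccontinuous (fun _ => c) w.
Proof.
  intros e He. exists 1. split; [lra|]. intros u _.
  replace (c - c)%C with (RtoC 0) by ring. rewrite Cmod_0. lra.
Qed.

Lemma ccontinuous_id (w : C) : ccontinuous (fun u => u) w.
Proof. intros e He. exists e. auto. Qed.

Lemma ccontinuous_plus F G w :
  ccontinuous F w -> ccontinuous G w -> ccontinuous (fun u => F u + G u)%C w.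
Proof.
  intros HF HG e He.
  destruct (HF (e/2)) as [d1 [Hd1 H1]]; [lra|].
  destruct (HG (e/2)) as [d2 [Hd2 H2]]; [lra|].
  exists (Rmin d1 d2). split; [apply Rmin_pos; lra|]. intros u Hu.
  specialize (H1 u (Rlt_le_trans _ _ _ Hu (Rmin_l _ _))).
  specialize (H2 u (Rlt_le_trans _ _ _ Hu (Rmin_r _ _))).
  replace (F u + G u - (F w + G w))%C with ((F u - F w) + (G u - G w))%C by ring.
  pose proof (Cmod_triangle (F u - F w) (G u - G w)). lra.
Qed.

Lemma ccontinuous_mult F G w :
  ccontinuous F w -> ccontinuous G w -> ccontinuous (fun u => F u * G u)%C w.
Proof.
  intros HF HG e He.
  set (A := Cmod (F w)). set (B := Cmod (G w)).
  assert (HA : 0 <= A) by apply Cmod_ge_0. assert (HB : 0 <= B) by apply Cmod_ge_0.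
  (* with [eta <= 1] and [eta (A + B + 1) <= e/2] the product rule error is below [e] *)
  set (eta := Rmin 1 (e / (2 * (A + B + 1)))).
  assert (Heta : 0 < eta) by (apply Rmin_pos; [lra | apply Rdiv_lt_0_compat; lra]).
  assert (Heta1 : eta <= 1) by apply Rmin_l.
  assert (Heta2 : eta * (A + B + 1) <= e / 2).
  { assert (eta <= e / (2 * (A + B + 1))) by apply Rmin_r.
    apply Rmult_le_compat_r with (r := A + B + 1) in H; [|lra].
    replace (e / (2 * (A + B + 1)) * (A + B + 1)) with (e / 2) in H by (field; lra). lra. }
  destruct (HF eta Heta) as [d1 [Hd1 H1]].
  destruct (HG eta Heta) as [d2 [Hd2 H2]].
  exists (Rmin d1 d2). split; [apply Rmin_pos; lra|]. intros u Hu.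
  specialize (H1 u (Rlt_le_trans _ _ _ Hu (Rmin_l _ _))).
  specialize (H2 u (Rlt_le_trans _ _ _ Hu (Rmin_r _ _))).
  replace (F u * G u - F w * G w)%C with ((F u - F w) * G u + F w * (G u - G w))%C by ring.
  eapply Rle_lt_trans; [apply Cmod_triangle|]. rewrite !Cmod_mult. fold A.
  pose proof (Cmod_le_sub (G u) (G w)). fold B in H.
  pose proof (Cmod_ge_0 (F u - F w)). pose proof (Cmod_ge_0 (G u - G w)).
  pose proof (Cmod_ge_0 (G u)).
  assert (Cmod (F u - F w) * Cmod (G u) <= eta * (B + 1)) by (apply Rmult_le_compat; lra).
  assert (A * Cmod (G u - G w) <= A * eta) by (apply Rmult_le_compat_l; lra).
  nra.
Qed.

Lemma ccontinuous_scal c F w : ccontinuous F w -> ccontinuous (fun u => c * F u)%C w.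
Proof. intros HF. apply (ccontinuous_mult (fun _ => c)); auto. apply ccontinuous_const. Qed.

Lemma ccontinuous_minus F G w :
  ccontinuous F w -> ccontinuous G w -> ccontinuous (fun u => F u - G u)%C w.
Proof.
  intros HF HG. intros e He.
  destruct (ccontinuous_plus F (fun u => (-1) * G u)%C w HF (ccontinuous_scal _ _ _ HG) e He)
    as [d [Hd H]].
  exists d. split; auto. intros u Hu. specialize (H u Hu).
  replace (F u - G u - (F w - G w))%C with (F u + -1 * G u - (F w + -1 * G w))%C by ring. auto.
Qed.

Lemma ccontinuous_inv G w :
  ccontinuous G w -> G w <> RtoC 0 -> ccontinuous (fun u => / G u)%C w.
Proof.
  intros HG Hn e He.
  set (B := Cmod (G w)).
  assert (HB : 0 < B) by (apply Cmod_gt_0; auto).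
  set (eta := Rmin (B / 2) (e * B * B / 2)).
  assert (Heta : 0 < eta).
  { apply Rmin_pos; [lra|]. apply Rdiv_lt_0_compat; [|lra].
    apply Rmult_lt_0_compat; [apply Rmult_lt_0_compat|]; lra. }
  assert (Heta1 : eta <= B / 2) by apply Rmin_l.
  assert (Heta2 : eta <= e * B * B / 2) by apply Rmin_r.
  destruct (HG eta Heta) as [d [Hd H]].
  exists d. split; auto. intros u Hu. specialize (H u Hu).
  assert (HGu : B / 2 <= Cmod (G u)).
  { pose proof (Cmod_le_sub (G w) (G u)). rewrite Cmod_sub_sym in H0. fold B in H0. lra. }
  assert (Gu0 : G u <> RtoC 0) by (apply Cmod_gt_0; lra).
  replace (/ G u - / G w)%C with (- (G u - G w) / (G u * G w))%C by (field; auto).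
  rewrite Cmod_div, Cmod_opp, Cmod_mult by (apply Cmult_neq0; auto). fold B.
  assert (Hsmall : Cmod (G u - G w) < e * (Cmod (G u) * B)).
  { apply Rmult_le_compat_l with (r := e) in HGu; [|lra].
    apply Rmult_le_compat_r with (r := B) in HGu; lra. }
  apply Rmult_lt_reg_r with (Cmod (G u) * B); [nra|].
  unfold Rdiv. rewrite Rmult_assoc, Rinv_l by nra. lra.
Qed.

(* Caratheodory's form of complex differentiability: through the slope function [q], the rules
   of the differential calculus reduce to those of continuity. *)
Definition is_cderive (F : C -> C) (w L : C) : Prop :=
  exists q d, 0 < d /\ q w = L /\ ccontinuous q w /\
    forall u, Cmod (u - w) < d -> F u = (F w + q u * (u - w))%C.

Lemma is_cderive_approx F w L : is_cderive F w L ->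
  forall e, 0 < e -> exists d, 0 < d /\
    forall u, Cmod (u - w) < d -> Cmod (F u - F w - L * (u - w)) <= e * Cmod (u - w).
Proof.
  intros [q [d [Hd [Hq [Hc HF]]]]] e He.
  destruct (Hc e He) as [d2 [Hd2 H2]].
  exists (Rmin d d2). split; [apply Rmin_pos; lra|]. intros u Hu.
  rewrite (HF u (Rlt_le_trans _ _ _ Hu (Rmin_l _ _))).
  replace (F w + q u * (u - w) - F w - L * (u - w))%C with ((q u - q w) * (u - w))%C
    by (rewrite Hq; ring).
  rewrite Cmod_mult. apply Rmult_le_compat_r; [apply Cmod_ge_0|].
  left. apply H2. exact (Rlt_le_trans _ _ _ Hu (Rmin_r _ _)).
Qed.

Lemma is_cderive_continuous F w L : is_cderive F w L -> ccontinuous F w.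
Proof.
  intros [q [d [Hd [Hq [Hc HF]]]]].
  assert (Hlin : ccontinuous (fun u => F w + q u * (u - w))%C w).
  { apply ccontinuous_plus; [apply ccontinuous_const|]. apply ccontinuous_mult; auto.
    apply ccontinuous_minus; [apply ccontinuous_id | apply ccontinuous_const]. }
  intros e He. destruct (Hlin e He) as [d2 [Hd2 H2]].
  exists (Rmin d d2). split; [apply Rmin_pos; lra|]. intros u Hu.
  rewrite (HF u (Rlt_le_trans _ _ _ Hu (Rmin_l _ _))).
  specialize (H2 u (Rlt_le_trans _ _ _ Hu (Rmin_r _ _))).
  replace (w - w)%C with (RtoC 0) in H2 by ring.
  replace (F w + q w * 0)%C with (F w) in H2 by ring. exact H2.
Qed.

Lemma is_cderive_const c w : is_cderive (fun _ => c) w 0.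
Proof.
  exists (fun _ => RtoC 0), 1. repeat split; [lra | apply ccontinuous_const |].
  intros. ring.
Qed.

Lemma is_cderive_id w : is_cderive (fun u => u) w 1.
Proof.
  exists (fun _ => RtoC 1), 1. repeat split; [lra | apply ccontinuous_const |].
  intros. ring.
Qed.

Lemma is_cderive_plus F G w LF LG :
  is_cderive F w LF -> is_cderive G w LG -> is_cderive (fun u => F u + G u)%C w (LF + LG)%C.
Proof.
  intros [q1 [d1 [Hd1 [Hq1 [Hc1 H1]]]]] [q2 [d2 [Hd2 [Hq2 [Hc2 H2]]]]].
  exists (fun u => q1 u + q2 u)%C, (Rmin d1 d2).
  split; [apply Rmin_pos; lra|]. split; [rewrite Hq1, Hq2; auto|].
  split; [apply ccontinuous_plus; auto|]. intros u Hu.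
  rewrite (H1 u (Rlt_le_trans _ _ _ Hu (Rmin_l _ _))).
  rewrite (H2 u (Rlt_le_trans _ _ _ Hu (Rmin_r _ _))). ring.
Qed.

Lemma is_cderive_scal c F w L :
  is_cderive F w L -> is_cderive (fun u => c * F u)%C w (c * L)%C.
Proof.
  intros [q [d [Hd [Hq [Hc H]]]]].
  exists (fun u => c * q u)%C, d. split; auto. split; [rewrite Hq; auto|].
  split; [apply ccontinuous_scal; auto|]. intros u Hu. rewrite (H u Hu). ring.
Qed.

Lemma is_cderive_minus F G w LF LG :
  is_cderive F w LF -> is_cderive G w LG -> is_cderive (fun u => F u - G u)%C w (LF - LG)%C.
Proof.
  intros HF HG.
  destruct (is_cderive_plus _ _ _ _ _ HF (is_cderive_scal (-1) _ _ _ HG)) as [q [d [Hd [Hq [Hc H]]]]].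
  exists q, d. split; auto. split; [rewrite Hq; ring|]. split; auto.
  intros u Hu. specialize (H u Hu). cbv beta in H.
  replace (F u - G u)%C with (F u + -1 * G u)%C by ring. rewrite H. ring.
Qed.

Lemma is_cderive_mult F G w LF LG :
  is_cderive F w LF -> is_cderive G w LG ->
  is_cderive (fun u => F u * G u)%C w (LF * G w + F w * LG)%C.
Proof.
  intros HF HG. pose proof (is_cderive_continuous F w LF HF) as HFc.
  destruct HF as [q1 [d1 [Hd1 [Hq1 [Hc1 H1]]]]].
  destruct HG as [q2 [d2 [Hd2 [Hq2 [Hc2 H2]]]]].
  exists (fun u => q1 u * G w + F u * q2 u)%C, (Rmin d1 d2).
  split; [apply Rmin_pos; lra|]. split; [rewrite Hq1, Hq2; auto|]. split.
  { apply ccontinuous_plus; apply ccontinuous_mult; auto. apply ccontinuous_const. }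
  intros u Hu. pose proof (H1 u (Rlt_le_trans _ _ _ Hu (Rmin_l _ _))) as E1.
  rewrite (H2 u (Rlt_le_trans _ _ _ Hu (Rmin_r _ _))).
  replace (F w * G w + (q1 u * G w + F u * q2 u) * (u - w))%C
    with ((F w + q1 u * (u - w)) * G w + F u * q2 u * (u - w))%C by ring.
  rewrite <- E1. ring.
Qed.

Lemma is_cderive_inv G w L : is_cderive G w L -> G w <> RtoC 0 ->
  is_cderive (fun u => / G u)%C w (- L / (G w * G w))%C.
Proof.
  intros HG Hn. pose proof (is_cderive_continuous G w L HG) as HGc.
  destruct HG as [q [d [Hd [Hq [Hc H]]]]].
  assert (HB : 0 < Cmod (G w)) by (apply Cmod_gt_0; auto).
  destruct (HGc (Cmod (G w)) HB) as [d2 [Hd2 H2]].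
  assert (Gu : forall u, Cmod (u - w) < d2 -> G u <> RtoC 0).
  { intros u Hu E. specialize (H2 u Hu). rewrite E, Cmod_sub_sym in H2.
    replace (G w - 0)%C with (G w) in H2 by ring. lra. }
  exists (fun u => -1 * q u * / (G u * G w))%C, (Rmin d d2).
  split; [apply Rmin_pos; lra|]. split; [rewrite Hq; unfold Cdiv; ring|]. split.
  { apply ccontinuous_mult; [apply ccontinuous_scal; auto|].
    apply ccontinuous_inv; [|apply Cmult_neq0; auto].
    apply ccontinuous_mult; [|apply ccontinuous_const]. auto. }
  intros u Hu. pose proof (Gu u (Rlt_le_trans _ _ _ Hu (Rmin_r _ _))) as Hu0.
  pose proof (H u (Rlt_le_trans _ _ _ Hu (Rmin_l _ _))) as E.
  replace (-1 * q u * / (G u * G w) * (u - w))%C with (- (q u * (u - w)) / (G u * G w))%C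
    by (field; split; auto).
  replace (q u * (u - w))%C with (G u - G w)%C by (rewrite E; ring).
  field. split; auto.
Qed.

Lemma is_cderive_unique F w L1 L2 : is_cderive F w L1 -> is_cderive F w L2 -> L1 = L2.
Proof.
  intros H1 H2.
  assert (E : (L1 - L2)%C = RtoC 0).
  { apply Cmod_small_eq0. intros e He.
    destruct (is_cderive_approx F w L1 H1 (e/4)) as [d1 [Hd1 E1]]; [lra|].
    destruct (is_cderive_approx F w L2 H2 (e/4)) as [d2 [Hd2 E2]]; [lra|].
    set (t := Rmin d1 d2 / 2).
    assert (Ht : 0 < t) by (apply Rdiv_lt_0_compat; [apply Rmin_pos|]; lra).
    assert (Ht1 : t < d1) by (pose proof (Rmin_l d1 d2); unfold t; lra).
    assert (Ht2 : t < d2) by (pose proof (Rmin_r d1 d2); unfold t; lra).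
    set (u := (w + RtoC t)%C).
    assert (Hu : Cmod (u - w) = t).
    { unfold u. replace (w + RtoC t - w)%C with (RtoC t) by ring.
      rewrite Cmod_R. apply Rabs_pos_eq. lra. }
    specialize (E1 u ltac:(lra)). specialize (E2 u ltac:(lra)). rewrite Hu in E1, E2.
    assert (HK : Cmod ((L1 - L2) * (u - w)) <= e / 4 * t + e / 4 * t).
    { replace ((L1 - L2) * (u - w))%C
        with ((F u - F w - L2 * (u - w)) - (F u - F w - L1 * (u - w)))%C by ring.
      eapply Rle_trans; [apply Cmod_triangle|]. rewrite Cmod_opp. lra. }
    rewrite Cmod_mult, Hu in HK. nra. }
  replace L1 with ((L1 - L2) + L2)%C by ring. rewrite E. ring.
Qed.

Lemma is_derive_is_cderive (F : C -> C) (w L : C) :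
  @is_derive C_AbsRing C_NormedModule F w L -> is_cderive F w L.
Proof.
  intros [_ Hd]. specialize (Hd w (fun P HP => HP)).
  (* the slope is the difference quotient, patched with [L] at [w] *)
  set (q := fun u => match excluded_middle_informative (u = w) with
                     | left _ => L | right _ => ((F u - F w) / (u - w))%C end).
  assert (Hqw : q w = L) by (unfold q; destruct (excluded_middle_informative (w = w)); congruence).
  assert (Huw : forall u, u <> w -> (u - w)%C <> RtoC 0).
  { intros u NE E. apply NE. replace u with ((u - w) + w)%C by ring. rewrite E. ring. }
  exists q, 1. split; [lra|]. split; auto. split.
  - intros e He. destruct (Hd (mkposreal (e/2) ltac:(lra))) as [d Hdd].
    exists d. split; [apply cond_pos|]. intros u Hu. rewrite Hqw. unfold q.
    destruct (excluded_middle_informative (u = w)) as [E|NE].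
    { replace (L - L)%C with (RtoC 0) by ring. rewrite Cmod_0. lra. }
    specialize (Hdd u Hu). simpl in Hdd.
    change (Cmod ((F u - F w) - (u - w) * L) <= e / 2 * Cmod (u - w)) in Hdd.
    pose proof (Huw u NE) as Hne.
    replace ((F u - F w) / (u - w) - L)%C with (((F u - F w) - (u - w) * L) / (u - w))%C
      by (field; auto).
    rewrite Cmod_div by auto.
    assert (0 < Cmod (u - w)) by (apply Cmod_gt_0; auto).
    apply Rle_lt_trans with (e / 2); [|lra].
    apply Rmult_le_reg_r with (Cmod (u - w)); auto. unfold Rdiv at 1.
    rewrite Rmult_assoc, Rinv_l by lra. lra.
  - intros u _. unfold q. destruct (excluded_middle_informative (u = w)) as [E|NE].
    + rewrite E. ring.
    + field. auto.
Qed.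

(** * Integrals along segments and around rectangles *)

Definition cint (h : R -> C) (a b : R) : C :=
  (RInt (fun t => fst (h t)) a b, RInt (fun t => snd (h t)) a b).

Definition ex_cint (h : R -> C) (a b : R) : Prop :=
  ex_RInt (fun t => fst (h t)) a b /\ ex_RInt (fun t => snd (h t)) a b.

Definition rcontinuous (g : R -> C) (t : R) : Prop :=
  forall e, 0 < e -> exists d, 0 < d /\
    forall u, Rabs (u - t) < d -> Cmod (g u - g t) < e.

Definition is_rderive (g : R -> C) (t : R) (l : C) : Prop :=
  forall e, 0 < e -> exists d, 0 < d /\
    forall u, Rabs (u - t) < d -> Cmod (g u - g t - RtoC (u - t) * l) <= e * Rabs (u - t).

Lemma rcontinuous_re_im (g : R -> C) t : rcontinuous g t ->
  continuous (fun u => fst (g u)) t /\ continuous (fun u => snd (g u)) t.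
Proof.
  intros Hg. split; apply continuity_pt_filterlim; intros e He;
    destruct (Hg e He) as [d [Hd H]]; exists d; split; auto;
    intros u [_ Hu]; simpl in *; unfold R_dist in *; specialize (H u Hu);
    eapply Rle_lt_trans; try exact H.
  - replace (fst (g u) - fst (g t)) with (fst (g u - g t)%C) by (simpl; ring). apply re_le_Cmod.
  - replace (snd (g u) - snd (g t)) with (snd (g u - g t)%C) by (simpl; ring). apply im_le_Cmod.
Qed.

Lemma is_rderive_re_im (g : R -> C) t l : is_rderive g t l ->
  is_derive (fun u => fst (g u)) t (fst l) /\ is_derive (fun u => snd (g u)) t (snd l).
Proof.
  intros Hg.
  assert (Hcomponent : forall pr : C -> R, (forall z, Rabs (pr z) <= Cmod z) ->
    (forall h : R, pr (g (t + h)) - pr (g t) - h * pr l = pr (g (t + h)%R - g t - RtoC h * l)%C) ->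
    derivable_pt_lim (fun u => pr (g u)) t (pr l)).
  { intros pr Hpr Hlin e He. destruct (Hg (e/2)) as [d [Hd H]]; [lra|].
    exists (mkposreal d Hd). intros h Hh Hhd. simpl in Hhd.
    specialize (H (t + h)). replace (t + h - t) with h in H by ring. specialize (H Hhd).
    assert (Habs : 0 < Rabs h) by (apply Rabs_pos_lt; auto).
    replace ((pr (g (t + h)) - pr (g t)) / h - pr l) with (pr (g (t + h)%R - g t - RtoC h * l)%C / h)
      by (rewrite <- Hlin; field; auto).
    unfold Rdiv. rewrite Rabs_mult, Rabs_inv.
    apply Rmult_lt_reg_r with (Rabs h); auto. rewrite Rmult_assoc, Rinv_l by lra.
    pose proof (Hpr (g (t + h)%R - g t - RtoC h * l)%C). nra. }
  split; apply is_derive_Reals, Hcomponent.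
  - apply re_le_Cmod.
  - intros h. simpl. ring.
  - apply im_le_Cmod.
  - intros h. simpl. ring.
Qed.

Lemma ex_cint_continuous (g : R -> C) a b :
  (forall t, Rmin a b <= t <= Rmax a b -> rcontinuous g t) -> ex_cint g a b.
Proof.
  intros Hg. split; apply (@ex_RInt_continuous R_CompleteNormedModule);
    intros t Ht; apply (rcontinuous_re_im g t (Hg t Ht)).
Qed.

Lemma cint_derive (g g' : R -> C) a b :
  (forall t, Rmin a b <= t <= Rmax a b -> is_rderive g t (g' t)) ->
  (forall t, Rmin a b <= t <= Rmax a b -> rcontinuous g' t) ->
  cint g' a b = (g b - g a)%C.
Proof.
  intros Hd Hc. unfold cint. apply injective_projections; simpl; apply is_RInt_unique.
  - apply (is_RInt_derive (fun u => fst (g u))); intros t Ht;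
      [apply (is_rderive_re_im g t (g' t) (Hd t Ht)) | apply (rcontinuous_re_im g' t (Hc t Ht))].
  - apply (is_RInt_derive (fun u => snd (g u))); intros t Ht;
      [apply (is_rderive_re_im g t (g' t) (Hd t Ht)) | apply (rcontinuous_re_im g' t (Hc t Ht))].
Qed.

Lemma cint_ext (h1 h2 : R -> C) a b : a <= b ->
  (forall t, a <= t <= b -> h1 t = h2 t) -> cint h1 a b = cint h2 a b.
Proof.
  intros Hab H. unfold cint.
  f_equal; apply RInt_ext; intros t Ht; rewrite Rmin_left, Rmax_right in Ht by lra;
    rewrite H; auto; lra.
Qed.

Lemma cint_Chasles h a b c : ex_cint h a b -> ex_cint h b c ->
  (cint h a b + cint h b c)%C = cint h a c.
Proof.
  intros [H1 H2] [H3 H4]. unfold cint. apply injective_projections; simpl;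
    apply (@RInt_Chasles R_CompleteNormedModule); auto.
Qed.

Lemma cint_plus h1 h2 a b : ex_cint h1 a b -> ex_cint h2 a b ->
  cint (fun t => h1 t + h2 t)%C a b = (cint h1 a b + cint h2 a b)%C.
Proof.
  intros [H1 H2] [H3 H4]. unfold cint. apply injective_projections; simpl.
  - apply (RInt_plus (fun t => fst (h1 t)) (fun t => fst (h2 t))); auto.
  - apply (RInt_plus (fun t => snd (h1 t)) (fun t => snd (h2 t))); auto.
Qed.

Lemma cint_scal c h a b : ex_cint h a b -> cint (fun t => c * h t)%C a b = (c * cint h a b)%C.
Proof.
  intros [H1 H2]. unfold cint. destruct c as [c1 c2].
  assert (E1 : ex_RInt (fun t => c1 * fst (h t)) a b) by exact (ex_RInt_scal _ a b c1 H1).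
  assert (E2 : ex_RInt (fun t => c2 * snd (h t)) a b) by exact (ex_RInt_scal _ a b c2 H2).
  assert (E3 : ex_RInt (fun t => c1 * snd (h t)) a b) by exact (ex_RInt_scal _ a b c1 H2).
  assert (E4 : ex_RInt (fun t => c2 * fst (h t)) a b) by exact (ex_RInt_scal _ a b c2 H1).
  apply injective_projections; simpl.
  - rewrite (RInt_minus (fun t => c1 * fst (h t)) (fun t => c2 * snd (h t))) by auto.
    rewrite (RInt_scal (fun t => fst (h t))), (RInt_scal (fun t => snd (h t))); auto.
  - rewrite (RInt_plus (fun t => c1 * snd (h t)) (fun t => c2 * fst (h t))) by auto.
    rewrite (RInt_scal (fun t => fst (h t))), (RInt_scal (fun t => snd (h t))); auto.
Qed.

Lemma cint_norm_le h a b M : a <= b -> ex_cint h a b ->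
  (forall t, a <= t <= b -> Cmod (h t) <= M) -> Cmod (cint h a b) <= 2 * (b - a) * M.
Proof.
  intros Hab [H1 H2] HM. eapply Rle_trans; [apply Cmod_le_re_im|]. unfold cint; simpl.
  assert (Rabs (RInt (fun t => fst (h t)) a b) <= (b - a) * M).
  { apply abs_RInt_le_const; auto. intros t Ht. eapply Rle_trans; [apply re_le_Cmod|]. auto. }
  assert (Rabs (RInt (fun t => snd (h t)) a b) <= (b - a) * M).
  { apply abs_RInt_le_const; auto. intros t Ht. eapply Rle_trans; [apply im_le_Cmod|]. auto. }
  lra.
Qed.

Definition unit_line (p : R -> C) (d : C) : Prop :=
  (forall u t, (p u - p t)%C = (RtoC (u - t) * d)%C) /\ Cmod d = 1.

Definition line_int (f : C -> C) (p : R -> C) (d : C) (a b : R) : C :=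
  cint (fun t => f (p t) * d)%C a b.

Section LineIntegral.

Variables (p : R -> C) (d : C).
Hypothesis Hp : unit_line p d.

Lemma unit_line_dist u t : Cmod (p u - p t) = Rabs (u - t).
Proof. destruct Hp as [Hl Hd]. rewrite Hl, Cmod_mult, Cmod_R, Hd. ring. Qed.

Lemma rcontinuous_along f t : ccontinuous f (p t) -> rcontinuous (fun u => f (p u) * d)%C t.
Proof.
  intros Hf e He. destruct (Hf e He) as [dl [Hdl H]]. exists dl. split; auto.
  intros u Hu. rewrite <- unit_line_dist in Hu. specialize (H _ Hu).
  replace (f (p u) * d - f (p t) * d)%C with ((f (p u) - f (p t)) * d)%C by ring.
  rewrite Cmod_mult, (proj2 Hp). lra.
Qed.

Lemma is_rderive_along P t L : is_cderive P (p t) L -> is_rderive (fun u => P (p u)) t (L * d)%C.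
Proof.
  intros HP e He. destruct (is_cderive_approx P (p t) L HP e He) as [dl [Hdl H]].
  exists dl. split; auto. intros u Hu. rewrite <- unit_line_dist in Hu |- *.
  replace (RtoC (u - t) * (L * d))%C with (L * (RtoC (u - t) * d))%C by ring.
  rewrite <- (proj1 Hp). auto.
Qed.

Lemma ex_line_int f a b : a <= b -> (forall t, a <= t <= b -> ccontinuous f (p t)) ->
  ex_cint (fun t => f (p t) * d)%C a b.
Proof.
  intros Hab Hf. apply ex_cint_continuous. intros t Ht.
  rewrite Rmin_left, Rmax_right in Ht by lra. apply rcontinuous_along; auto.
Qed.

Lemma line_int_primitive P f a b : a <= b ->
  (forall t, a <= t <= b -> is_cderive P (p t) (f (p t)) /\ ccontinuous f (p t)) ->
  line_int f p d a b = (P (p b) - P (p a))%C.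
Proof.
  intros Hab H. apply (cint_derive (fun u => P (p u))); intros t Ht;
    rewrite Rmin_left, Rmax_right in Ht by lra.
  - apply is_rderive_along, H; auto.
  - apply rcontinuous_along, H; auto.
Qed.

Lemma line_int_norm_le f M a b : a <= b ->
  (forall t, a <= t <= b -> ccontinuous f (p t)) ->
  (forall t, a <= t <= b -> Cmod (f (p t)) <= M) ->
  Cmod (line_int f p d a b) <= 2 * (b - a) * M.
Proof.
  intros Hab Hf HM. apply cint_norm_le; auto. apply ex_line_int; auto.
  intros t Ht. rewrite Cmod_mult, (proj2 Hp), Rmult_1_r. auto.
Qed.

Lemma line_int_plus f g a b : a <= b ->
  (forall t, a <= t <= b -> ccontinuous f (p t)) ->
  (forall t, a <= t <= b -> ccontinuous g (p t)) ->
  line_int (fun w => f w + g w)%C p d a b = (line_int f p d a b + line_int g p d a b)%C.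
Proof.
  intros Hab Hf Hg. unfold line_int.
  rewrite (cint_ext _ (fun t => f (p t) * d + g (p t) * d)%C) by (auto; intros; ring).
  apply cint_plus; apply ex_line_int; auto.
Qed.

Lemma line_int_scal c f a b : a <= b ->
  (forall t, a <= t <= b -> ccontinuous f (p t)) ->
  line_int (fun w => c * f w)%C p d a b = (c * line_int f p d a b)%C.
Proof.
  intros Hab Hf. unfold line_int.
  rewrite (cint_ext _ (fun t => c * (f (p t) * d))%C) by (auto; intros; ring).
  apply cint_scal, ex_line_int; auto.
Qed.

Lemma line_int_Chasles f a b c : a <= b <= c ->
  (forall t, a <= t <= c -> ccontinuous f (p t)) ->
  (line_int f p d a b + line_int f p d b c)%C = line_int f p d a c.
Proof.
  intros Habc Hf. apply cint_Chasles; apply ex_line_int; try lra; intros t Ht; apply Hf; lra.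
Qed.

Lemma line_int_ext f g a b : a <= b -> (forall t, a <= t <= b -> f (p t) = g (p t)) ->
  line_int f p d a b = line_int g p d a b.
Proof. intros Hab H. apply cint_ext; auto. intros t Ht. rewrite H; auto. Qed.

End LineIntegral.

Definition hline (y t : R) : C := (t, y).
Definition vline (x t : R) : C := (x, t).

Lemma unit_line_hline y : unit_line (hline y) 1.
Proof.
  split; [|apply Cmod_1]. intros u t. unfold hline, RtoC.
  apply injective_projections; simpl; ring.
Qed.

Lemma unit_line_vline x : unit_line (vline x) Ci.
Proof.
  split; [|apply Cmod_Ci]. intros u t. unfold vline, RtoC, Ci.
  apply injective_projections; simpl; ring.
Qed.

(* integral over the positively oriented boundary of [x1, x2] x [y1, y2] *)
Definition rect_int (f : C -> C) (x1 x2 y1 y2 : R) : C :=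
  (line_int f (hline y1) 1 x1 x2 + line_int f (vline x2) Ci y1 y2
   - line_int f (hline y2) 1 x1 x2 - line_int f (vline x1) Ci y1 y2)%C.

Definition in_rect (x1 x2 y1 y2 : R) (w : C) : Prop :=
  x1 <= fst w <= x2 /\ y1 <= snd w <= y2.

Definition on_boundary (P : C -> Prop) (x1 x2 y1 y2 : R) : Prop :=
  (forall t, x1 <= t <= x2 -> P (hline y1 t) /\ P (hline y2 t)) /\
  (forall t, y1 <= t <= y2 -> P (vline x1 t) /\ P (vline x2 t)).

Lemma on_boundary_impl (P Q : C -> Prop) x1 x2 y1 y2 :
  (forall w, P w -> Q w) -> on_boundary P x1 x2 y1 y2 -> on_boundary Q x1 x2 y1 y2.
Proof. intros H [H1 H2]. split; intros t Ht; split; apply H; first [apply (H1 t Ht) | apply (H2 t Ht)]. Qed.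

Lemma on_boundary_and (P Q : C -> Prop) x1 x2 y1 y2 :
  on_boundary P x1 x2 y1 y2 -> on_boundary Q x1 x2 y1 y2 ->
  on_boundary (fun w => P w /\ Q w) x1 x2 y1 y2.
Proof.
  intros [H1 H2] [H3 H4].
  split; intros t Ht; repeat split; first [apply (H1 t Ht) | apply (H2 t Ht) | apply (H3 t Ht) | apply (H4 t Ht)].
Qed.

Lemma on_boundary_in_rect (P : C -> Prop) x1 x2 y1 y2 : x1 <= x2 -> y1 <= y2 ->
  (forall w, in_rect x1 x2 y1 y2 w -> P w) -> on_boundary P x1 x2 y1 y2.
Proof. intros Hx Hy H. split; intros t Ht; split; apply H; unfold in_rect, hline, vline; simpl; lra. Qed.

Section RectangleIntegral.

Variables (x1 x2 y1 y2 : R).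
Hypotheses (Hx : x1 <= x2) (Hy : y1 <= y2).

Lemma rect_int_ext f g : on_boundary (fun w => f w = g w) x1 x2 y1 y2 ->
  rect_int f x1 x2 y1 y2 = rect_int g x1 x2 y1 y2.
Proof.
  intros [H1 H2]. unfold rect_int.
  rewrite (line_int_ext (hline y1) 1 f g x1 x2), (line_int_ext (hline y2) 1 f g x1 x2),
    (line_int_ext (vline x1) Ci f g y1 y2), (line_int_ext (vline x2) Ci f g y1 y2);
    auto; intros t Ht; first [apply (H1 t Ht) | apply (H2 t Ht)].
Qed.

Lemma rect_int_plus f g :
  on_boundary (ccontinuous f) x1 x2 y1 y2 -> on_boundary (ccontinuous g) x1 x2 y1 y2 ->
  rect_int (fun w => f w + g w)%C x1 x2 y1 y2 = (rect_int f x1 x2 y1 y2 + rect_int g x1 x2 y1 y2)%C.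
Proof.
  intros [F1 F2] [G1 G2]. unfold rect_int.
  rewrite (line_int_plus (hline y1) 1), (line_int_plus (hline y2) 1),
    (line_int_plus (vline x1) Ci), (line_int_plus (vline x2) Ci);
    auto using unit_line_hline, unit_line_vline;
    try (intros t Ht; first [apply (F1 t Ht) | apply (F2 t Ht) | apply (G1 t Ht) | apply (G2 t Ht)]).
  ring.
Qed.

Lemma rect_int_scal c f : on_boundary (ccontinuous f) x1 x2 y1 y2 ->
  rect_int (fun w => c * f w)%C x1 x2 y1 y2 = (c * rect_int f x1 x2 y1 y2)%C.
Proof.
  intros [F1 F2]. unfold rect_int.
  rewrite (line_int_scal (hline y1) 1), (line_int_scal (hline y2) 1),
    (line_int_scal (vline x1) Ci), (line_int_scal (vline x2) Ci);
    auto using unit_line_hline, unit_line_vline;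
    try (intros t Ht; first [apply (F1 t Ht) | apply (F2 t Ht)]).
  ring.
Qed.

Lemma rect_int_norm_le f M :
  on_boundary (ccontinuous f) x1 x2 y1 y2 -> on_boundary (fun w => Cmod (f w) <= M) x1 x2 y1 y2 ->
  Cmod (rect_int f x1 x2 y1 y2) <= 4 * ((x2 - x1) + (y2 - y1)) * M.
Proof.
  intros [F1 F2] [M1 M2]. unfold rect_int.
  pose proof (line_int_norm_le _ _ (unit_line_hline y1) f M x1 x2 Hx
    (fun t Ht => proj1 (F1 t Ht)) (fun t Ht => proj1 (M1 t Ht))).
  pose proof (line_int_norm_le _ _ (unit_line_hline y2) f M x1 x2 Hx
    (fun t Ht => proj2 (F1 t Ht)) (fun t Ht => proj2 (M1 t Ht))).
  pose proof (line_int_norm_le _ _ (unit_line_vline x1) f M y1 y2 Hy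
    (fun t Ht => proj1 (F2 t Ht)) (fun t Ht => proj1 (M2 t Ht))).
  pose proof (line_int_norm_le _ _ (unit_line_vline x2) f M y1 y2 Hy
    (fun t Ht => proj2 (F2 t Ht)) (fun t Ht => proj2 (M2 t Ht))).
  set (A := line_int f (hline y1) 1 x1 x2) in *. set (B := line_int f (vline x2) Ci y1 y2) in *.
  set (A' := line_int f (hline y2) 1 x1 x2) in *. set (B' := line_int f (vline x1) Ci y1 y2) in *.
  pose proof (Cmod_triangle (A + B + - A') (- B')). pose proof (Cmod_triangle (A + B) (- A')).
  pose proof (Cmod_triangle A B). rewrite Cmod_opp in *.
  replace (A + B - A' - B')%C with (A + B + - A' + - B')%C by ring. lra.
Qed.

Lemma rect_int_primitive P f :
  on_boundary (fun w => is_cderive P w (f w) /\ ccontinuous f w) x1 x2 y1 y2 ->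
  rect_int f x1 x2 y1 y2 = RtoC 0.
Proof.
  intros [H1 H2]. unfold rect_int.
  rewrite (line_int_primitive (hline y1) 1 (unit_line_hline y1) P f x1 x2),
    (line_int_primitive (hline y2) 1 (unit_line_hline y2) P f x1 x2),
    (line_int_primitive (vline x1) Ci (unit_line_vline x1) P f y1 y2),
    (line_int_primitive (vline x2) Ci (unit_line_vline x2) P f y1 y2); auto;
    try (intros t Ht; first [apply (H1 t Ht) | apply (H2 t Ht)]).
  unfold hline, vline. ring.
Qed.

End RectangleIntegral.

Lemma rect_int_split_x f x1 xm x2 y1 y2 : x1 <= xm <= x2 -> y1 <= y2 ->
  on_boundary (ccontinuous f) x1 x2 y1 y2 ->
  rect_int f x1 x2 y1 y2 = (rect_int f x1 xm y1 y2 + rect_int f xm x2 y1 y2)%C.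
Proof.
  intros Hx Hy [F1 _]. unfold rect_int.
  rewrite <- (line_int_Chasles (hline y1) 1 (unit_line_hline y1) f x1 xm x2),
    <- (line_int_Chasles (hline y2) 1 (unit_line_hline y2) f x1 xm x2)
    by (auto; intros t Ht; apply (F1 t Ht)).
  ring.
Qed.

Lemma rect_int_split_y f x1 x2 y1 ym y2 : x1 <= x2 -> y1 <= ym <= y2 ->
  on_boundary (ccontinuous f) x1 x2 y1 y2 ->
  rect_int f x1 x2 y1 y2 = (rect_int f x1 x2 y1 ym + rect_int f x1 x2 ym y2)%C.
Proof.
  intros Hx Hy [_ F2]. unfold rect_int.
  rewrite <- (line_int_Chasles (vline x1) Ci (unit_line_vline x1) f y1 ym y2),
    <- (line_int_Chasles (vline x2) Ci (unit_line_vline x2) f y1 ym y2)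
    by (auto; intros t Ht; apply (F2 t Ht)).
  ring.
Qed.

(** * Goursat's theorem and the Cauchy estimate *)

Lemma rect_int_quadrisect f a b w h : 0 <= w -> 0 <= h ->
  (forall z, in_rect a (a + w) b (b + h) z -> ccontinuous f z) ->
  rect_int f a (a + w) b (b + h) =
  (rect_int f a (a + w/2) b (b + h/2) + rect_int f (a + w/2) (a + w/2 + w/2) b (b + h/2)
   + rect_int f a (a + w/2) (b + h/2) (b + h/2 + h/2)
   + rect_int f (a + w/2) (a + w/2 + w/2) (b + h/2) (b + h/2 + h/2))%C.
Proof.
  intros Hw Hh Hc.
  replace (a + w/2 + w/2) with (a + w) by field. replace (b + h/2 + h/2) with (b + h) by field.
  rewrite (rect_int_split_x f a (a + w/2) (a + w)), (rect_int_split_y f a (a + w/2) b (b + h/2)),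
    (rect_int_split_y f (a + w/2) (a + w) b (b + h/2)); try lra;
    try (apply on_boundary_in_rect; try lra; intros z Hz; apply Hc; unfold in_rect in *; lra).
  ring.
Qed.

Definition quarter_corner (f : C -> C) (w h : R) (c : R * R) : R * R :=
  let (a, b) := c in
  let m := Cmod (rect_int f a (a + w) b (b + h)) / 4 in
  if Rle_dec m (Cmod (rect_int f a (a + w/2) b (b + h/2))) then (a, b)
  else if Rle_dec m (Cmod (rect_int f (a + w/2) (a + w/2 + w/2) b (b + h/2))) then (a + w/2, b)
  else if Rle_dec m (Cmod (rect_int f a (a + w/2) (b + h/2) (b + h/2 + h/2))) then (a, b + h/2)
  else (a + w/2, b + h/2).

Lemma quarter_corner_spec f w h a b : 0 <= w -> 0 <= h ->
  (forall z, in_rect a (a + w) b (b + h) z -> ccontinuous f z) ->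
  let (a', b') := quarter_corner f w h (a, b) in
  Cmod (rect_int f a (a + w) b (b + h)) / 4 <= Cmod (rect_int f a' (a' + w/2) b' (b' + h/2)) /\
  (a' = a \/ a' = a + w/2) /\ (b' = b \/ b' = b + h/2).
Proof.
  intros Hw Hh Hc. unfold quarter_corner.
  pose proof (rect_int_quadrisect f a b w h Hw Hh Hc) as Q.
  set (m := Cmod (rect_int f a (a + w) b (b + h)) / 4).
  destruct (Rle_dec m _); [split; auto; lra|].
  destruct (Rle_dec m _); [split; auto; lra|].
  destruct (Rle_dec m _); [split; auto; lra|].
  split; [|split; right; auto].
  (* one of the four quarters carries at least a quarter of the total, by the triangle inequality *)
  unfold m in *. rewrite Q in *.
  set (A := rect_int f a (a + w/2) b (b + h/2)) in *.
  set (B := rect_int f (a + w/2) (a + w/2 + w/2) b (b + h/2)) in *.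
  set (A' := rect_int f a (a + w/2) (b + h/2) (b + h/2 + h/2)) in *.
  set (B' := rect_int f (a + w/2) (a + w/2 + w/2) (b + h/2) (b + h/2 + h/2)) in *.
  pose proof (Cmod_triangle (A + B + A') B'). pose proof (Cmod_triangle (A + B) A').
  pose proof (Cmod_triangle A B). lra.
Qed.

Lemma nested_intervals (A W : nat -> R) :
  (forall n, A n <= A (S n)) -> (forall n, A (S n) + W (S n) <= A n + W n) -> (forall n, 0 <= W n) ->
  exists a, forall n, A n <= a <= A n + W n.
Proof.
  intros HA HB HW.
  assert (Hall : forall m n, A m <= A n + W n).
  { intros m n. destruct (Nat.le_ge_cases m n) as [h|h].
    - assert (A m <= A n) by (induction h as [|k h IH]; [lra | specialize (HA k); lra]).
      specialize (HW n). lra.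
    - assert (A m + W m <= A n + W n) by (induction h as [|k h IH]; [lra | specialize (HB k); lra]).
      specialize (HW m). lra. }
  destruct (completeness (fun r => exists n, r = A n)) as [a [Hub Hl]].
  - exists (A 0%nat + W 0%nat). intros r [n ->]. apply Hall.
  - exists (A 0%nat). exists 0%nat. auto.
  - exists a. intros n. split; [apply Hub; exists n; auto|].
    apply Hl. intros r [m ->]. apply Hall.
Qed.

Fixpoint quarter_corners (f : C -> C) (w h : R) (c : R * R) (n : nat) : R * R :=
  match n with
  | O => c
  | S k => quarter_corner f (w / 2 ^ k) (h / 2 ^ k) (quarter_corners f w h c k)
  end.

Lemma goursat_nested_rects f x1 x2 y1 y2 : x1 <= x2 -> y1 <= y2 ->
  (forall w, in_rect x1 x2 y1 y2 w -> ccontinuous f w) ->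
  exists z, forall n, exists a b,
    x1 <= a /\ a + (x2 - x1) / 2 ^ n <= x2 /\ y1 <= b /\ b + (y2 - y1) / 2 ^ n <= y2 /\
    in_rect a (a + (x2 - x1) / 2 ^ n) b (b + (y2 - y1) / 2 ^ n) z /\
    Cmod (rect_int f x1 x2 y1 y2) / 4 ^ n
      <= Cmod (rect_int f a (a + (x2 - x1) / 2 ^ n) b (b + (y2 - y1) / 2 ^ n)).
Proof.
  intros Hx Hy Hc.
  set (W := fun n => (x2 - x1) / 2 ^ n). set (H := fun n => (y2 - y1) / 2 ^ n).
  set (s := quarter_corners f (x2 - x1) (y2 - y1) (x1, y1)).
  set (c := Cmod (rect_int f x1 x2 y1 y2)).
  assert (HW : forall n, 0 <= W n) by (intros n; apply Rdiv_le_0_compat; [lra | apply pow_lt; lra]).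
  assert (HH : forall n, 0 <= H n) by (intros n; apply Rdiv_le_0_compat; [lra | apply pow_lt; lra]).
  assert (WS : forall n, W (S n) = W n / 2) by (intros n; unfold W; simpl; field; apply pow_nonzero; lra).
  assert (HS : forall n, H (S n) = H n / 2) by (intros n; unfold H; simpl; field; apply pow_nonzero; lra).
  set (Inv := fun n => x1 <= fst (s n) /\ fst (s n) + W n <= x2 /\ y1 <= snd (s n) /\
    snd (s n) + H n <= y2 /\ c / 4 ^ n <= Cmod (rect_int f (fst (s n)) (fst (s n) + W n) (snd (s n)) (snd (s n) + H n))).
  assert (Step : forall n, Inv n -> Inv (S n) /\
    fst (s n) <= fst (s (S n)) /\ fst (s (S n)) + W (S n) <= fst (s n) + W n /\
    snd (s n) <= snd (s (S n)) /\ snd (s (S n)) + H (S n) <= snd (s n) + H n).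
  { intros n. unfold Inv.
    replace (s (S n)) with (quarter_corner f (W n) (H n) (s n)) by reflexivity.
    destruct (s n) as [a b]. cbn [fst snd]. intros [I1 [I2 [I3 [I4 I5]]]].
    pose proof (quarter_corner_spec f (W n) (H n) a b (HW n) (HH n)) as G.
    destruct (quarter_corner f (W n) (H n) (a, b)) as [a' b']. cbn [fst snd].
    destruct G as [G0 [G1 G2]]; [intros z Hz; apply Hc; unfold in_rect in *; lra|].
    rewrite WS, HS. replace (c / 4 ^ S n) with (c / 4 ^ n / 4) by (simpl; field; apply pow_nonzero; lra).
    pose proof (HW n). pose proof (HH n).
    destruct G1 as [->| ->]; destruct G2 as [->| ->]; repeat split; lra. }
  assert (Inv_all : forall n, Inv n).
  { induction n as [|n IHn]; [|apply Step; auto].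
    unfold Inv, W, H. simpl. unfold Rdiv. rewrite Rinv_1, !Rmult_1_r.
    replace (x1 + (x2 - x1)) with x2 by ring. replace (y1 + (y2 - y1)) with y2 by ring.
    unfold c. repeat split; lra. }
  destruct (nested_intervals (fun n => fst (s n)) W) as [a Ha]; auto; try (intros n; apply Step, Inv_all).
  destruct (nested_intervals (fun n => snd (s n)) H) as [b Hb]; auto; try (intros n; apply Step, Inv_all).
  exists (a, b). intros n. exists (fst (s n)), (snd (s n)).
  destruct (Inv_all n) as [I1 [I2 [I3 [I4 I5]]]]. specialize (Ha n). specialize (Hb n).
  unfold in_rect. simpl in *. unfold W, H in *. repeat split; auto; lra.
Qed.

Lemma div_pow2_lt (a d : R) : 0 < d -> exists N, a / 2 ^ N < d.
Proof.
  intros Hd. assert (Ha : 0 < Rabs a + 1) by (pose proof (Rabs_pos a); lra).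
  destruct (pow_lt_1_zero (/ 2)) with (y := d / (Rabs a + 1)) as [N HN].
  - rewrite Rabs_pos_eq; lra.
  - apply Rdiv_lt_0_compat; lra.
  - exists N. specialize (HN N (le_n N)). rewrite pow_inv, Rabs_pos_eq in HN
      by (apply Rlt_le, Rinv_0_lt_compat, pow_lt; lra).
    assert (Hp : 0 < / 2 ^ N) by (apply Rinv_0_lt_compat, pow_lt; lra).
    apply Rmult_lt_compat_l with (r := Rabs a + 1) in HN; [|lra].
    replace ((Rabs a + 1) * (d / (Rabs a + 1))) with d in HN by (field; lra).
    pose proof (Rle_abs a). unfold Rdiv. nra.
Qed.

Lemma rect_int_affine A L z0 x1 x2 y1 y2 : x1 <= x2 -> y1 <= y2 ->
  rect_int (fun w => A + L * (w - z0))%C x1 x2 y1 y2 = RtoC 0.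
Proof.
  intros Hx Hy.
  apply (rect_int_primitive x1 x2 y1 y2 Hx Hy (fun w => A * w + L / 2 * ((w - z0) * (w - z0)))%C).
  apply on_boundary_in_rect; auto. intros w _.
  assert (Hd : forall w, is_cderive (fun u => u - z0)%C w (1 - 0)%C)
    by (intros; apply is_cderive_minus; [apply is_cderive_id | apply is_cderive_const]).
  split.
  - replace (A + L * (w - z0))%C
      with (A * 1 + L / 2 * ((1 - 0) * (w - z0) + (w - z0) * (1 - 0)))%C by field.
    apply is_cderive_plus.
    + apply is_cderive_scal, is_cderive_id.
    + apply is_cderive_scal, (is_cderive_mult (fun u => u - z0)%C (fun u => u - z0)%C); auto.
  - apply ccontinuous_plus; [apply ccontinuous_const|]. apply ccontinuous_scal.
    apply ccontinuous_minus; [apply ccontinuous_id | apply ccontinuous_const].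
Qed.

Lemma in_rect_dist a b w h u z : in_rect a (a + w) b (b + h) u -> in_rect a (a + w) b (b + h) z ->
  Cmod (u - z) <= w + h.
Proof.
  intros Hu Hz. eapply Rle_trans; [apply Cmod_le_re_im|]. unfold in_rect in *. simpl.
  assert (Rabs (fst u + - fst z) <= w) by (apply Rabs_le; lra).
  assert (Rabs (snd u + - snd z) <= h) by (apply Rabs_le; lra). lra.
Qed.

Lemma rect_int_near_derivable f z0 L eps a b w h : 0 <= w -> 0 <= h -> 0 <= eps ->
  in_rect a (a + w) b (b + h) z0 ->
  on_boundary (ccontinuous f) a (a + w) b (b + h) ->
  on_boundary (fun u => Cmod (f u - f z0 - L * (u - z0)) <= eps * Cmod (u - z0)) a (a + w) b (b + h) ->
  Cmod (rect_int f a (a + w) b (b + h)) <= 4 * eps * (w + h) ^ 2.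
Proof.
  intros Hw Hh He Hz Hc Happrox.
  assert (Haff : forall u, ccontinuous (fun u => f z0 + L * (u - z0))%C u).
  { intros u. apply ccontinuous_plus; [apply ccontinuous_const|]. apply ccontinuous_scal.
    apply ccontinuous_minus; [apply ccontinuous_id | apply ccontinuous_const]. }
  assert (Hrem : on_boundary (ccontinuous (fun u => f u - (f z0 + L * (u - z0)))%C) a (a + w) b (b + h))
    by (apply (on_boundary_impl (ccontinuous f)); auto; intros u Hu; apply ccontinuous_minus; auto).
  rewrite (rect_int_ext a (a + w) b (b + h) ltac:(lra) ltac:(lra) f
    (fun u => (f u - (f z0 + L * (u - z0))) + (f z0 + L * (u - z0)))%C)
    by (apply on_boundary_in_rect; try lra; intros; ring).
  rewrite rect_int_plus, rect_int_affine, Cplus_0_r; auto; try lra.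
  2: apply on_boundary_in_rect; auto; lra.
  replace (4 * eps * (w + h) ^ 2) with (4 * ((a + w - a) + (b + h - b)) * (eps * (w + h))) by ring.
  apply rect_int_norm_le; auto; try lra.
  apply (on_boundary_impl (fun u => in_rect a (a + w) b (b + h) u /\
    Cmod (f u - f z0 - L * (u - z0)) <= eps * Cmod (u - z0))).
  - intros u [Hu Hb]. pose proof (in_rect_dist a b w h u z0 Hu Hz).
    replace (f u - (f z0 + L * (u - z0)))%C with (f u - f z0 - L * (u - z0))%C by ring.
    eapply Rle_trans; [exact Hb|]. apply Rmult_le_compat_l; auto.
  - apply on_boundary_and; auto. apply on_boundary_in_rect; auto; lra.
Qed.

(* The rectangles of goursat_nested_rects shrink to a point z; comparing the defect |rect| / 4^n
   of the n-th one with the linear approximation of f at z shows |rect| <= 4 eps K^2. *)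
Lemma rect_int_norm_le_eps f x1 x2 y1 y2 : x1 <= x2 -> y1 <= y2 ->
  (forall w, in_rect x1 x2 y1 y2 w -> exists L, is_cderive f w L) ->
  forall eps, 0 < eps -> Cmod (rect_int f x1 x2 y1 y2) <= 4 * eps * ((x2 - x1) + (y2 - y1)) ^ 2.
Proof.
  intros Hx Hy Hd eps Heps.
  assert (Hc : forall w, in_rect x1 x2 y1 y2 w -> ccontinuous f w).
  { intros w Hw. destruct (Hd w Hw) as [L HL]. exact (is_cderive_continuous f w L HL). }
  destruct (goursat_nested_rects f x1 x2 y1 y2 Hx Hy Hc) as [z Hz].
  set (K := (x2 - x1) + (y2 - y1)).
  assert (Hzin : in_rect x1 x2 y1 y2 z).
  { destruct (Hz 0%nat) as [a [b [H1 [H2 [H3 [H4 [H5 _]]]]]]].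
    unfold in_rect in *. simpl in *. rewrite Rdiv_1_r in *. lra. }
  destruct (Hd z Hzin) as [L HL].
  destruct (is_cderive_approx f z L HL eps Heps) as [dl [Hdl Happ]].
  destruct (div_pow2_lt K dl Hdl) as [N HN].
  destruct (Hz N) as [a [b [H1 [H2 [H3 [H4 [H5 H6]]]]]]].
  assert (H2N : 0 < 2 ^ N) by (apply pow_lt; lra).
  assert (Hw : 0 <= (x2 - x1) / 2 ^ N) by (apply Rdiv_le_0_compat; lra).
  assert (Hh : 0 <= (y2 - y1) / 2 ^ N) by (apply Rdiv_le_0_compat; lra).
  pose proof (rect_int_near_derivable f z L eps a b _ _ Hw Hh ltac:(lra) H5) as B.
  rewrite <- Rdiv_plus_distr in B. fold K in B.
  assert (Hc4 : Cmod (rect_int f x1 x2 y1 y2) / 4 ^ N <= 4 * eps * (K / 2 ^ N) ^ 2).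
  { eapply Rle_trans; [exact H6|]. apply B.
    - apply on_boundary_in_rect; try lra. intros w Hw'. apply Hc. unfold in_rect in *. lra.
    - apply on_boundary_in_rect; try lra. intros w Hw'. apply Happ.
      pose proof (in_rect_dist a b _ _ w z Hw' H5).
      rewrite <- Rdiv_plus_distr in H. fold K in H. lra. }
  replace ((K / 2 ^ N) ^ 2) with (K ^ 2 / 4 ^ N) in Hc4
    by (replace (4 ^ N) with (2 ^ N * 2 ^ N) by (rewrite <- Rpow_mult_distr; f_equal; lra); field; lra).
  assert (H4N : 0 < 4 ^ N) by (apply pow_lt; lra).
  apply Rmult_le_reg_r with (/ 4 ^ N); [apply Rinv_0_lt_compat; lra|]. unfold Rdiv in Hc4. lra.
Qed.

Theorem goursat f x1 x2 y1 y2 : x1 <= x2 -> y1 <= y2 ->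
  (forall w, in_rect x1 x2 y1 y2 w -> exists L, is_cderive f w L) ->
  rect_int f x1 x2 y1 y2 = RtoC 0.
Proof.
  intros Hx Hy Hd. apply Cmod_eq_0, Rle_antisym; [|apply Cmod_ge_0].
  apply Rle_plus_epsilon. intros eps Heps.
  set (K := (x2 - x1) + (y2 - y1)).
  assert (HK : 0 <= K ^ 2) by apply pow2_ge_0.
  eapply Rle_trans; [apply (rect_int_norm_le_eps f x1 x2 y1 y2 Hx Hy Hd (eps / (4 * K ^ 2 + 1)));
    apply Rdiv_lt_0_compat; lra|]. fold K.
  replace (4 * (eps / (4 * K ^ 2 + 1)) * K ^ 2) with (eps * (4 * K ^ 2 / (4 * K ^ 2 + 1))) by (field; lra).
  assert (4 * K ^ 2 / (4 * K ^ 2 + 1) <= 1).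
  { apply Rmult_le_reg_r with (4 * K ^ 2 + 1); [lra|]. unfold Rdiv. rewrite Rmult_assoc, Rinv_l; lra. }
  nra.
Qed.

Definition square_int (f : C -> C) (z : C) (s : R) : C :=
  rect_int f (fst z - s) (fst z + s) (snd z - s) (snd z + s).

Definition in_square (z : C) (s : R) (w : C) : Prop :=
  in_rect (fst z - s) (fst z + s) (snd z - s) (snd z + s) w.

Lemma RInt_odd_kernel c s : 0 < s ->
  RInt (fun t => (t - c) / ((t - c) ^ 2 + s ^ 2)) (c - s) (c + s) = 0.
Proof.
  intros Hs.
  assert (Hp : forall t, 0 < (t - c) ^ 2 + s ^ 2) by (intros; pose proof (pow2_ge_0 (t - c)); nra).
  apply is_RInt_unique.
  replace 0 with (minus ((fun t => ln ((t - c) ^ 2 + s ^ 2) / 2) (c + s))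
                        ((fun t => ln ((t - c) ^ 2 + s ^ 2) / 2) (c - s))).
  - apply (@is_RInt_derive R_CompleteNormedModule (fun t => ln ((t - c) ^ 2 + s ^ 2) / 2)).
    + intros x _. auto_derive; [apply Hp|]. field. apply Rgt_not_eq, Hp.
    + intros x _. apply (@ex_derive_continuous R_AbsRing R_NormedModule). auto_derive.
      apply Rgt_not_eq, Hp.
  - unfold minus, plus, opp; simpl. replace (c + s - c) with s by ring.
    replace (c - s - c) with (- s) by ring. replace (- s * (- s * 1)) with (s * (s * 1)) by ring. ring.
Qed.

Lemma RInt_Poisson_kernel c s : 0 < s ->
  RInt (fun t => s / ((t - c) ^ 2 + s ^ 2)) (c - s) (c + s) = PI / 2.
Proof.
  intros Hs.
  assert (Hp : forall t, 0 < (t - c) ^ 2 + s ^ 2) by (intros; pose proof (pow2_ge_0 (t - c)); nra).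
  apply is_RInt_unique.
  replace (PI / 2) with (minus ((fun t => atan ((t - c) / s)) (c + s)) ((fun t => atan ((t - c) / s)) (c - s))).
  - apply (@is_RInt_derive R_CompleteNormedModule (fun t => atan ((t - c) / s))).
    + intros x _. auto_derive; auto. field. split; [apply Rgt_not_eq, Hp | lra].
    + intros x _. apply (@ex_derive_continuous R_AbsRing R_NormedModule). auto_derive.
      apply Rgt_not_eq, Hp.
  - unfold minus, plus, opp; simpl. replace ((c + s - c) / s) with 1 by (field; lra).
    replace ((c - s - c) / s) with (- (1)) by (field; lra). rewrite atan_opp, atan_1. field.
Qed.

Lemma cint_winding_edge c s sg : 0 < s ->
  cint (fun t => ((t - c) / ((t - c) ^ 2 + s ^ 2), sg * (s / ((t - c) ^ 2 + s ^ 2))) : C) (c - s) (c + s)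
  = ((0, sg * (PI / 2)) : C).
Proof.
  intros Hs. unfold cint. cbn [fst snd]. rewrite RInt_odd_kernel by auto. f_equal.
  rewrite <- (RInt_Poisson_kernel c s Hs).
  apply (RInt_scal (fun t => s / ((t - c) ^ 2 + s ^ 2))).
  apply (@ex_RInt_continuous R_CompleteNormedModule). intros t _.
  apply (@ex_derive_continuous R_AbsRing R_NormedModule). auto_derive.
  pose proof (pow2_ge_0 (t - c)). pose proof (pow_lt s 2 Hs). lra.
Qed.

Lemma square_int_winding z s : 0 < s -> square_int (fun w => / (w - z))%C z s = ((0, 2 * PI) : C).
Proof.
  intros Hs. destruct z as [zr zi]. unfold square_int, rect_int, line_int. cbn [fst snd].
  (* on each edge the integrand is, up to sign, the conjugate Poisson kernel plus i times the Poisson kernel *)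
  assert (Edge : forall (p : R -> C) d c sg,
    (forall t, (/ (p t - (zr, zi)) * d)%C
               = (((t - c) / ((t - c) ^ 2 + s ^ 2), sg * (s / ((t - c) ^ 2 + s ^ 2))) : C)) ->
    cint (fun t => / (p t - (zr, zi)) * d)%C (c - s) (c + s) = ((0, sg * (PI / 2)) : C)).
  { intros p d c sg Hp. rewrite <- (cint_winding_edge c s sg Hs).
    apply cint_ext; [lra|]. intros t _. apply Hp. }
  rewrite (Edge (hline (zi - s)) 1 zr 1), (Edge (vline (zr + s)) Ci zi 1),
    (Edge (hline (zi + s)) 1 zr (-1)), (Edge (vline (zr - s)) Ci zi (-1));
    try (intros t; unfold hline, vline; pose proof (Rle_0_sqr (t - zr)); pose proof (Rle_0_sqr (t - zi));
      unfold Rsqr in *; apply injective_projections; simpl; field; intro E; nra).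
  apply injective_projections; simpl; field.
Qed.

Lemma square_int_shrink f z s s' : 0 < s' <= s ->
  (forall w, in_square z s w -> w <> z -> exists L, is_cderive f w L) ->
  square_int f z s = square_int f z s'.
Proof.
  intros Hs Hd. destruct z as [zr zi]. unfold square_int, in_square in *. cbn [fst snd] in *.
  set (x0 := zr - s) in *. set (x1 := zr - s'). set (x2 := zr + s'). set (x3 := zr + s) in *.
  set (y0 := zi - s) in *. set (y1 := zi - s'). set (y2 := zi + s'). set (y3 := zi + s) in *.
  assert (Hne : forall w, fst w <> zr \/ snd w <> zi -> w <> (zr, zi))
    by (intros w [H|H] E; apply H; rewrite E; reflexivity).
  assert (Hc : forall p q r t, x0 <= p <= q -> q <= x3 -> y0 <= r <= t -> t <= y3 ->
    p <> zr -> q <> zr -> r <> zi -> t <> zi -> on_boundary (ccontinuous f) p q r t).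
  { intros p q r t Hpq Hq Hrt Ht Hp' Hq' Hr' Ht'.
    assert (Hcw : forall w, in_rect x0 x3 y0 y3 w -> w <> (zr, zi) -> ccontinuous f w)
      by (intros w Hw Hwz; destruct (Hd w Hw Hwz) as [L HL]; exact (is_cderive_continuous f w L HL)).
    split; intros u Hu; split; apply Hcw; unfold in_rect, hline, vline; simpl; try lra;
      apply Hne; simpl; auto. }
  (* the four rectangles around the inner square do not contain z, so Goursat applies to them *)
  assert (Hg : forall p q r t, x0 <= p <= q -> q <= x3 -> y0 <= r <= t -> t <= y3 ->
    (q < zr \/ zr < p \/ t < zi \/ zi < r) -> rect_int f p q r t = RtoC 0).
  { intros p q r t Hpq Hq Hrt Ht Hout. apply goursat; try lra. intros w Hw. apply Hd.
    - unfold in_rect in *. lra.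
    - apply Hne. unfold in_rect in Hw. lra. }
  rewrite (rect_int_split_x f x0 x1 x3), (rect_int_split_x f x1 x2 x3),
    (rect_int_split_y f x1 x2 y0 y1 y3), (rect_int_split_y f x1 x2 y1 y2 y3);
    try (apply Hc; unfold x0, x1, x2, x3, y0, y1, y2, y3; lra);
    unfold x0, x1, x2, x3, y0, y1, y2, y3 in *; try lra.
  rewrite (Hg (zr - s) (zr - s')), (Hg (zr + s') (zr + s)), (Hg (zr - s') (zr + s') (zi - s) (zi - s')),
    (Hg (zr - s') (zr + s') (zi + s') (zi + s)); try lra.
  ring.
Qed.

Lemma square_int_norm_le f z s M : 0 <= s ->
  on_boundary (ccontinuous f) (fst z - s) (fst z + s) (snd z - s) (snd z + s) ->
  on_boundary (fun w => Cmod (f w) <= M) (fst z - s) (fst z + s) (snd z - s) (snd z + s) ->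
  Cmod (square_int f z s) <= 16 * s * M.
Proof.
  intros Hs Hc HM. unfold square_int.
  replace (16 * s * M) with (4 * ((fst z + s - (fst z - s)) + (snd z + s - (snd z - s))) * M) by ring.
  apply rect_int_norm_le; auto; lra.
Qed.

Lemma square_boundary_dist z s : 0 < s ->
  on_boundary (fun w => s <= Cmod (w - z) <= 2 * s) (fst z - s) (fst z + s) (snd z - s) (snd z + s).
Proof.
  intros Hs.
  assert (Hup : forall w, Rabs (fst w - fst z) <= s -> Rabs (snd w - snd z) <= s -> Cmod (w - z) <= 2 * s)
    by (intros w H1 H2; eapply Rle_trans; [apply Cmod_le_re_im|]; simpl; unfold Rminus in *; lra).
  assert (Hre : forall w, Rabs (fst w - fst z) = s -> s <= Cmod (w - z))
    by (intros w H; rewrite <- H; apply (re_le_Cmod (w - z))).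
  assert (Him : forall w, Rabs (snd w - snd z) = s -> s <= Cmod (w - z))
    by (intros w H; rewrite <- H; apply (im_le_Cmod (w - z))).
  split; intros t Ht; repeat split;
    try (apply Hup; unfold hline, vline; simpl; apply Rabs_le; lra);
    try (apply Hre; unfold vline; simpl; first [rewrite Rabs_left by lra | rewrite Rabs_pos_eq by lra]; lra);
    try (apply Him; unfold hline; simpl; first [rewrite Rabs_left by lra | rewrite Rabs_pos_eq by lra]; lra).
Qed.

Definition second_quotient (F : C -> C) (z L w : C) : C :=
  ((F w - F z - L * (w - z)) / ((w - z) * (w - z)))%C.

Lemma second_quotient_derivable F z L w Lw : w <> z -> is_cderive F w Lw ->
  exists L', is_cderive (second_quotient F z L) w L'.
Proof.
  intros Hn HF.
  assert (Hwz : (w - z)%C <> RtoC 0)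
    by (intro E; apply Hn; replace w with ((w - z) + z)%C by ring; rewrite E; ring).
  assert (Hd : is_cderive (fun u => u - z)%C w (1 - 0)%C)
    by (apply is_cderive_minus; [apply is_cderive_id | apply is_cderive_const]).
  eexists. unfold second_quotient, Cdiv.
  apply (is_cderive_mult (fun u => F u - F z - L * (u - z))%C (fun u => / ((u - z) * (u - z)))%C).
  - apply is_cderive_minus; [apply is_cderive_minus; [exact HF | apply is_cderive_const]|].
    apply is_cderive_scal, Hd.
  - apply (is_cderive_inv (fun u => (u - z) * (u - z))%C); [|apply Cmult_neq0; auto].
    apply (is_cderive_mult (fun u => u - z)%C (fun u => u - z)%C); apply Hd.
Qed.

Lemma square_int_second_quotient F z L a : 0 < a ->
  (forall w, in_square z a w -> exists Lw, is_cderive F w Lw) -> is_cderive F z L ->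
  square_int (second_quotient F z L) z a = RtoC 0.
Proof.
  intros Ha HF HL.
  assert (HQ : forall w, in_square z a w -> w <> z ->
    exists L', is_cderive (second_quotient F z L) w L').
  { intros w Hw Hn. destruct (HF w Hw) as [Lw HLw].
    apply (second_quotient_derivable F z L w Lw); auto. }
  apply Cmod_small_eq0. intros e He.
  destruct (is_cderive_approx F z L HL (e / 32)) as [dl [Hdl Happ]]; [lra|].
  set (s := Rmin a (dl / 3)).
  assert (Hs : 0 < s <= a) by (split; [apply Rmin_pos; lra | apply Rmin_l]).
  assert (Hsd : 2 * s < dl) by (pose proof (Rmin_r a (dl / 3)); unfold s; lra).
  rewrite (square_int_shrink _ z a s) by auto.
  (* on the boundary of the small square s <= |w - z| <= 2 s < dl, so |second_quotient| <= e / (32 s) *)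
  assert (Hb : on_boundary (fun w => (s <= Cmod (w - z) <= 2 * s) /\ in_square z a w)
                 (fst z - s) (fst z + s) (snd z - s) (snd z + s)).
  { apply on_boundary_and; [apply square_boundary_dist; lra|].
    apply on_boundary_in_rect; try lra. intros w Hw. unfold in_square, in_rect in *. lra. }
  apply Rle_lt_trans with (16 * s * (e / 32 / s)); [|replace (16 * s * (e / 32 / s)) with (e / 2) by (field; lra); lra].
  apply square_int_norm_le; [lra| |]; (eapply on_boundary_impl; [|exact Hb]); intros w [[W1 W2] Wa];
    assert (Hwz' : (w - z)%C <> RtoC 0) by (apply Cmod_gt_0; lra).
  - assert (Hwz : w <> z) by (intro E; apply Hwz'; rewrite E; ring).
    destruct (HQ w Wa Hwz) as [L' HL']. exact (is_cderive_continuous _ _ _ HL').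
  - unfold second_quotient. rewrite Cmod_div, Cmod_mult by (apply Cmult_neq0; auto).
    specialize (Happ w ltac:(lra)). set (m := Cmod (w - z)) in *.
    apply Rle_trans with (e / 32 * m / (m * m)).
    + unfold Rdiv. apply Rmult_le_compat_r; [left; apply Rinv_0_lt_compat; nra | lra].
    + replace (e / 32 * m / (m * m)) with (e / 32 / m) by (field; lra).
      unfold Rdiv. apply Rmult_le_compat_l; [lra|]. apply Rinv_le_contravar; lra.
Qed.

Lemma square_boundary_avoids_center z s : 0 < s ->
  on_boundary (fun w => (w - z)%C <> RtoC 0) (fst z - s) (fst z + s) (snd z - s) (snd z + s).
Proof.
  intros Hs. eapply on_boundary_impl; [|apply (square_boundary_dist z s Hs)].
  intros w [Hw _]. apply Cmod_gt_0. lra.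
Qed.

Lemma is_cderive_inv_sub z w : (w - z)%C <> RtoC 0 ->
  is_cderive (fun u => / (u - z))%C w (- (1 - 0) / ((w - z) * (w - z)))%C.
Proof.
  intros Hw. apply (is_cderive_inv (fun u => u - z)%C); auto.
  apply is_cderive_minus; [apply is_cderive_id | apply is_cderive_const].
Qed.

Lemma square_int_inv_sq z s : 0 < s -> square_int (fun w => / ((w - z) * (w - z)))%C z s = RtoC 0.
Proof.
  intros Hs. unfold square_int.
  apply rect_int_primitive with (P := (fun w => -1 * / (w - z))%C); [lra | lra |].
  eapply on_boundary_impl; [|apply (square_boundary_avoids_center z s Hs)]. intros w Hw. split.
  - replace (/ ((w - z) * (w - z)))%C with (-1 * (- (1 - 0) / ((w - z) * (w - z))))%C
      by (field; auto).
    apply is_cderive_scal, is_cderive_inv_sub; auto.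
  - apply ccontinuous_inv; [|apply Cmult_neq0; auto].
    apply ccontinuous_mult; apply ccontinuous_minus; auto using ccontinuous_id, ccontinuous_const.
Qed.

Lemma square_int_cauchy_derivative F z L a : 0 < a ->
  (forall w, in_square z a w -> exists Lw, is_cderive F w Lw) -> is_cderive F z L ->
  square_int (fun w => F w / ((w - z) * (w - z)))%C z a = (L * ((0, (2 * PI)%R) : C))%C.
Proof.
  intros Ha HF HL. unfold square_int.
  set (k1 := fun w => (/ (w - z))%C). set (k2 := fun w => (/ ((w - z) * (w - z)))%C).
  assert (Hb : on_boundary (fun w => (w - z)%C <> RtoC 0 /\ in_square z a w)
                 (fst z - a) (fst z + a) (snd z - a) (snd z + a)).
  { apply on_boundary_and; [apply square_boundary_avoids_center; auto|].
    apply on_boundary_in_rect; [lra | lra | auto]. }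
  assert (C1 : on_boundary (ccontinuous k1) (fst z - a) (fst z + a) (snd z - a) (snd z + a)).
  { eapply on_boundary_impl; [|exact Hb]. intros w [Hw _].
    exact (is_cderive_continuous _ _ _ (is_cderive_inv_sub z w Hw)). }
  assert (C2 : on_boundary (ccontinuous k2) (fst z - a) (fst z + a) (snd z - a) (snd z + a)).
  { eapply on_boundary_impl; [|exact Hb]. intros w [Hw _]. apply ccontinuous_inv; [|apply Cmult_neq0; auto].
    apply ccontinuous_mult; apply ccontinuous_minus; auto using ccontinuous_id, ccontinuous_const. }
  assert (CQ : on_boundary (ccontinuous (second_quotient F z L)) (fst z - a) (fst z + a) (snd z - a) (snd z + a)).
  { eapply on_boundary_impl; [|exact Hb]. intros w [Hw Hin].
    assert (Hwz : w <> z) by (intro E; apply Hw; rewrite E; ring).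
    destruct (HF w Hin) as [Lw HLw]. destruct (second_quotient_derivable F z L w Lw Hwz HLw) as [L' HL'].
    exact (is_cderive_continuous _ _ _ HL'). }
  (* F w / (w - z)^2 = second_quotient F z L w + F z / (w - z)^2 + L / (w - z) *)
  rewrite (rect_int_ext (fst z - a) (fst z + a) (snd z - a) (snd z + a) ltac:(lra) ltac:(lra) _
    (fun w => second_quotient F z L w + (F z * k2 w + L * k1 w))%C).
  2: { eapply on_boundary_impl; [|exact Hb]. intros w [Hw _].
       unfold second_quotient, k1, k2. field. auto. }
  rewrite !rect_int_plus, !rect_int_scal; try lra; auto;
    try (apply (on_boundary_impl (fun w => ccontinuous k2 w /\ ccontinuous k1 w));
         [intros w [H2 H1] | apply on_boundary_and; auto]);
    try (apply ccontinuous_plus; apply ccontinuous_scal; auto); try (apply ccontinuous_scal; auto).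
  fold (square_int (second_quotient F z L) z a) (square_int k2 z a) (square_int k1 z a).
  unfold k1, k2. rewrite square_int_second_quotient, square_int_inv_sq, square_int_winding; auto.
  ring.
Qed.

Theorem cauchy_estimate F z a M L : 0 < a ->
  (forall w, in_square z a w -> exists Lw, is_cderive F w Lw) ->
  (forall w, in_square z a w -> Cmod (F w) <= M) ->
  is_cderive F z L -> Cmod L <= 4 * M / a.
Proof.
  intros Ha HF HM HL.
  assert (Hb : on_boundary (fun w => (a <= Cmod (w - z) <= 2 * a) /\ in_square z a w)
                 (fst z - a) (fst z + a) (snd z - a) (snd z + a)).
  { apply on_boundary_and; [apply square_boundary_dist; auto|].
    apply on_boundary_in_rect; [lra | lra | auto]. }
  assert (Bd : Cmod (square_int (fun w => F w / ((w - z) * (w - z)))%C z a) <= 16 * a * (M / (a * a))).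
  { apply square_int_norm_le; [lra| |]; (eapply on_boundary_impl; [|exact Hb]); intros w [[W1 W2] Wa];
      assert (Hwz : (w - z)%C <> RtoC 0) by (apply Cmod_gt_0; lra).
    - destruct (HF w Wa) as [Lw HLw]. unfold Cdiv. apply ccontinuous_mult.
      + exact (is_cderive_continuous _ _ _ HLw).
      + apply ccontinuous_inv; [|apply Cmult_neq0; auto].
        apply ccontinuous_mult; apply ccontinuous_minus; auto using ccontinuous_id, ccontinuous_const.
    - rewrite Cmod_div, Cmod_mult by (apply Cmult_neq0; auto).
      set (m := Cmod (w - z)) in *. pose proof (HM w Wa). pose proof (Cmod_ge_0 (F w)).
      unfold Rdiv. apply Rmult_le_compat; auto.
      + left. apply Rinv_0_lt_compat. nra.
      + apply Rinv_le_contravar; nra. }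
  rewrite square_int_cauchy_derivative with (L := L) in Bd by auto.
  rewrite Cmod_mult in Bd.
  replace (Cmod ((0, (2 * PI)%R) : C)) with (2 * PI) in Bd.
  2: { replace ((0, (2 * PI)%R) : C) with (RtoC (2 * PI) * Ci)%C
         by (unfold RtoC, Ci; apply injective_projections; simpl; ring).
       rewrite Cmod_mult, Cmod_Ci, Cmod_R, Rabs_pos_eq; [ring | pose proof PI_RGT_0; lra]. }
  (* 2 pi |L| <= 16 M / a and pi >= 2 *)
  replace (16 * a * (M / (a * a))) with (16 * M / a) in Bd by (field; lra).
  pose proof PI2_1. pose proof (Cmod_ge_0 L).
  assert (Cmod L * 4 <= Cmod L * (2 * PI)) by (apply Rmult_le_compat_l; lra).
  apply Rmult_le_reg_r with 4; [lra|].
  replace (4 * M / a * 4) with (16 * M / a) by (field; lra). lra.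
Qed.

(** * Holomorphic functions on the disk *)

Lemma ext_in (g : Dsk -> C) w (H : Cmod w < 1) : ext g w = g (exist _ w H).
Proof.
  unfold ext. destruct (Rlt_dec (Cmod w) 1) as [H'|H']; [|contradiction].
  f_equal. f_equal. apply proof_irrelevance.
Qed.

Lemma ext_proj1_sig (g : Dsk -> C) (z : Dsk) : ext g (proj1_sig z) = g z.
Proof. destruct z as [w H]. apply ext_in. Qed.

Lemma ext_fsub f g : ext (fsub f g) = (fun w => ext f w - ext g w)%C.
Proof.
  apply functional_extensionality. intros w. unfold ext, fsub.
  destruct (Rlt_dec (Cmod w) 1); [auto | ring].
Qed.

Lemma ext_fscal c f : ext (fscal c f) = (fun w => c * ext f w)%C.
Proof.
  apply functional_extensionality. intros w. unfold ext, fscal.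
  destruct (Rlt_dec (Cmod w) 1); [auto | ring].
Qed.

Lemma ext_fzero : ext fzero = (fun _ => RtoC 0).
Proof.
  apply functional_extensionality. intros w. unfold ext, fzero.
  destruct (Rlt_dec (Cmod w) 1); auto.
Qed.

Lemma hder_correct g z : holo g -> @is_derive C_AbsRing C_NormedModule (ext g) (proj1_sig z) (hder g z).
Proof.
  intros Hg. unfold hder.
  apply (epsilon_spec (inhabits (RtoC 0)) (fun l => @is_derive C_AbsRing C_NormedModule _ _ l)).
  apply (Hg z).
Qed.

Lemma hder_cderive g z : holo g -> is_cderive (ext g) (proj1_sig z) (hder g z).
Proof. intros Hg. apply is_derive_is_cderive, hder_correct; auto. Qed.

Lemma hder_unique g z l : holo g -> is_cderive (ext g) (proj1_sig z) l -> hder g z = l.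
Proof. intros Hg H. apply (is_cderive_unique (ext g) (proj1_sig z)); auto. apply hder_cderive; auto. Qed.

Lemma holo_fsub f g : holo f -> holo g -> holo (fsub f g).
Proof.
  intros Hf Hg z. rewrite ext_fsub. exists (minus (hder f z) (hder g z)).
  apply (@is_derive_minus C_AbsRing C_NormedModule (ext f) (ext g)); apply hder_correct; auto.
Qed.

Lemma holo_fzero : holo fzero.
Proof. intros z. rewrite ext_fzero. exists zero. apply (@is_derive_const C_AbsRing C_NormedModule). Qed.

Lemma hder_fsub f g z : holo f -> holo g -> hder (fsub f g) z = (hder f z - hder g z)%C.
Proof.
  intros Hf Hg. apply hder_unique; [apply holo_fsub; auto|]. rewrite ext_fsub.
  apply is_cderive_minus; apply hder_cderive; auto.
Qed.

Lemma hder_fscal c f z : holo f -> holo (fscal c f) -> hder (fscal c f) z = (c * hder f z)%C.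
Proof. intros Hf Hcf. apply hder_unique; auto. rewrite ext_fscal. apply is_cderive_scal, hder_cderive; auto. Qed.

Lemma hder_fzero z : hder fzero z = RtoC 0.
Proof. apply hder_unique; [apply holo_fzero|]. rewrite ext_fzero. apply is_cderive_const. Qed.

Lemma in_square_dist z s w : in_square z s w -> Cmod (w - z) <= 2 * s.
Proof.
  intros [H1 H2]. eapply Rle_trans; [apply Cmod_le_re_im|]. simpl.
  assert (Rabs (fst w + - fst z) <= s) by (apply Rabs_le; lra).
  assert (Rabs (snd w + - snd z) <= s) by (apply Rabs_le; lra). lra.
Qed.

(* Weierstrass: locally uniform convergence of holomorphic functions entails locally uniform
   convergence of the derivatives, by the Cauchy estimate on squares of half-side (1 - rho) / 4 *)
Theorem uc_conv_hder (gn : nat -> Dsk -> C) g : (forall n, holo (gn n)) -> holo g -> uc_conv gn g ->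
  forall rho, 0 <= rho < 1 -> forall eps, 0 < eps -> exists N : nat, forall n, (N <= n)%nat ->
    forall z : Dsk, Cmod (proj1_sig z) <= rho -> Cmod (hder (gn n) z - hder g z) <= eps.
Proof.
  intros Hn Hg Hc rho Hr eps He.
  set (a := (1 - rho) / 4). set (r' := (1 + rho) / 2).
  assert (Ha : 0 < a) by (unfold a; lra).
  destruct (Hc r' ltac:(unfold r'; lra) (eps * a / 4)) as [N HN].
  { apply Rdiv_lt_0_compat; [apply Rmult_lt_0_compat|]; lra. }
  exists N. intros n Hnn z Hz.
  assert (Hin : forall w, in_square (proj1_sig z) a w -> Cmod w <= r').
  { intros w Hw. pose proof (in_square_dist _ _ w Hw). pose proof (Cmod_le_sub w (proj1_sig z)).
    unfold r', a in *. lra. }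
  assert (Hin1 : forall w, in_square (proj1_sig z) a w -> Cmod w < 1)
    by (intros w Hw; specialize (Hin w Hw); unfold r' in Hin; lra).
  replace eps with (4 * (eps * a / 4) / a) by (field; lra).
  apply (cauchy_estimate (fun w => ext (gn n) w - ext g w)%C (proj1_sig z) a); auto.
  - intros w Hw. set (wd := exist (fun u => Cmod u < 1) w (Hin1 w Hw)).
    exists (hder (gn n) wd - hder g wd)%C.
    apply is_cderive_minus; [apply (hder_cderive (gn n) wd) | apply (hder_cderive g wd)]; auto.
  - intros w Hw. rewrite (ext_in (gn n) w (Hin1 w Hw)), (ext_in g w (Hin1 w Hw)).
    left. apply (HN n Hnn (exist _ w (Hin1 w Hw))). exact (Hin w Hw).
  - apply is_cderive_minus; apply hder_cderive; auto.
Qed.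

Lemma Cmod_proj1_sig_range (z : Dsk) : 0 <= Cmod (proj1_sig z) < 1.
Proof. split; [apply Cmod_ge_0 | apply (proj2_sig z)]. Qed.

Lemma uc_conv_pointwise (gn : nat -> Dsk -> C) h (z : Dsk) w : uc_conv gn h ->
  (forall e, 0 < e -> exists N : nat, forall n, (N <= n)%nat -> Cmod (gn n z - w) < e) -> h z = w.
Proof.
  intros Hu Hp.
  assert (E : (h z - w)%C = RtoC 0).
  { apply Cmod_small_eq0. intros e He.
    destruct (Hu _ (Cmod_proj1_sig_range z) (e/2) ltac:(lra)) as [N1 H1].
    destruct (Hp (e/2) ltac:(lra)) as [N2 H2].
    specialize (H1 (max N1 N2) (Nat.le_max_l _ _) z (Rle_refl _)).
    specialize (H2 (max N1 N2) (Nat.le_max_r _ _)).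
    pose proof (Cmod_sub_triangle (h z) (gn (max N1 N2) z) w). rewrite Cmod_sub_sym in H1. lra. }
  replace (h z) with ((h z - w) + w)%C by ring. rewrite E. ring.
Qed.

Lemma strict_incr_ge phi : strict_incr phi -> forall n, (n <= phi n)%nat.
Proof. intros H n. induction n; [lia|]. specialize (H n). lia. Qed.

Lemma fscal_m1 g : fscal (RtoC (-1)) g = fsub fzero g.
Proof.
  apply functional_extensionality; intros z; unfold fscal, fsub, fzero.
  unfold RtoC; apply injective_projections; simpl; ring.
Qed.

Lemma fsub_fadd f g : fsub f g = fadd f (fscal (RtoC (-1)) g).
Proof.
  apply functional_extensionality; intros z; unfold fscal, fsub, fadd.
  unfold RtoC; apply injective_projections; simpl; ring.
Qed.

Section IntrinsicOperator.

Variable T : (Dsk -> C) -> (Dsk -> C).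
Hypothesis HT : intrinsic T.

Lemma intrinsic_fzero : T fzero = fzero.
Proof.
  destruct HT as [_ [_ [Hscal _]]].
  assert (E : fzero = fscal (RtoC 0) fzero)
    by (apply functional_extensionality; intros z; unfold fscal, fzero; ring).
  rewrite E at 1. rewrite Hscal by apply holo_fzero.
  apply functional_extensionality; intros z; unfold fscal, fzero; ring.
Qed.

Lemma intrinsic_fsub f g : holo f -> holo g -> T (fsub f g) = fsub (T f) (T g).
Proof.
  intros Hf Hg. destruct HT as [_ [Hadd [Hscal _]]].
  assert (Hm : holo (fscal (RtoC (-1)) g)) by (rewrite fscal_m1; apply holo_fsub; auto; apply holo_fzero).
  rewrite fsub_fadd, Hadd, Hscal, <- fsub_fadd; auto.
Qed.

(* The limit of (T f_n) is identified by interleaving (f_n) with the constant sequence f. *)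
Lemma intrinsic_uc_conv (fn : nat -> Dsk -> C) f : (forall n, holo (fn n)) -> holo f ->
  uc_conv fn f -> uc_conv (fun n => T (fn n)) (T f).
Proof.
  intros Hn Hf Hc. destruct HT as [_ [_ [_ Hseq]]].
  set (kn := fun n => if Nat.even n then fn (Nat.div2 n) else f).
  assert (Hk : uc_conv kn f).
  { intros r Hr e He. destruct (Hc r Hr e He) as [N HN]. exists (2 * N)%nat. intros n Hnn z Hz.
    unfold kn. destruct (Nat.even n) eqn:Ev.
    - apply HN; auto. pose proof (Nat.div2_odd n). rewrite <- Nat.negb_even, Ev in H. simpl in H. lia.
    - replace (f z - f z)%C with (RtoC 0) by ring. rewrite Cmod_0. lra. }
  destruct (Hseq kn f) as [G HG]; auto.
  { intros n. unfold kn. destruct (Nat.even n); auto. }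
  assert (EG : G = T f).
  { apply functional_extensionality. intros z.
    assert (E : (G z - T f z)%C = RtoC 0).
    { apply Cmod_small_eq0. intros e He.
      destruct (HG _ (Cmod_proj1_sig_range z) e He) as [N HN].
      specialize (HN (2 * N + 1)%nat ltac:(lia) z (Rle_refl _)).
      unfold kn in HN. rewrite Nat.even_odd in HN. rewrite Cmod_sub_sym. auto. }
    replace (G z) with ((G z - T f z) + T f z)%C by ring. rewrite E. ring. }
  rewrite <- EG. intros r Hr e He. destruct (HG r Hr e He) as [N HN]. exists N. intros n Hnn z Hz.
  specialize (HN (2 * n)%nat ltac:(lia) z Hz). unfold kn in HN.
  rewrite Nat.even_even, Nat.div2_double in HN. auto.
Qed.

End IntrinsicOperator.

Lemma initial_space_bounded_subseq X nX (fn : nat -> Dsk -> C) M : initial_space X nX ->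
  (forall n, X (fn n)) -> (forall n, nX (fn n) <= M) ->
  exists phi h, strict_incr phi /\ X h /\ uc_conv (fun n => fn (phi n)) h.
Proof.
  intros [Hb [_ Hi]] HX HM.
  (* rescale into the unit ball, extract, and scale back *)
  set (c := / (Rabs M + 1)).
  assert (Hc : 0 < c) by (apply Rinv_0_lt_compat; pose proof (Rabs_pos M); lra).
  destruct (Hi (fun n => fscal (RtoC c) (fn n))) as [phi [h0 [Hphi [Hh0 Hu]]]].
  { intros n. split; [apply (bs_scal _ _ Hb); auto|].
    rewrite (bs_norm_scal _ _ Hb), Cmod_R, Rabs_pos_eq by (auto; lra).
    pose proof (bs_norm_ge0 _ _ Hb (fn n) (HX n)). pose proof (HM n). pose proof (Rle_abs M).
    apply Rle_trans with (c * (Rabs M + 1)); [apply Rmult_le_compat_l; lra|].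
    unfold c. rewrite Rinv_l; [lra | pose proof (Rabs_pos M); lra]. }
  exists phi, (fscal (RtoC (/ c)) h0). split; auto. split; [apply (bs_scal _ _ Hb); auto|].
  intros r Hr e He. destruct (Hu r Hr (e * c)) as [N HN]; [nra|]. exists N. intros n Hn z Hz.
  specialize (HN n Hn z Hz). unfold fscal in *.
  replace (fn (phi n) z - RtoC (/ c) * h0 z)%C with (RtoC (/ c) * (RtoC c * fn (phi n) z - h0 z))%C
    by (apply injective_projections; simpl; field; lra).
  rewrite Cmod_mult, Cmod_R, Rabs_pos_eq by (left; apply Rinv_0_lt_compat; lra).
  apply Rmult_lt_reg_l with c; auto. rewrite <- Rmult_assoc, Rinv_r by lra. lra.
Qed.

Lemma not_uc_conv (gn : nat -> Dsk -> C) g : ~ uc_conv gn g ->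
  exists r e, 0 <= r < 1 /\ 0 < e /\ forall N : nat, exists n, (N <= n)%nat /\
    exists z : Dsk, Cmod (proj1_sig z) <= r /\ e <= Cmod (gn n z - g z).
Proof.
  intros Hn. apply NNPP. intros H'. apply Hn. intros r Hr e He. apply NNPP. intros H2.
  apply H'. exists r, e. repeat split; auto; try apply Hr. intros N. apply NNPP. intros H3.
  apply H2. exists N. intros n Hnn z Hz. apply Rnot_le_lt. intros H4. apply H3.
  exists n. split; auto. exists z. auto.
Qed.

Fixpoint iter_choice (c : nat -> nat) (k : nat) : nat :=
  match k with O => c O | S k' => c (S (iter_choice c k')) end.

Lemma uc_conv_of_subsequences (gn : nat -> Dsk -> C) g :
  (forall psi, strict_incr psi -> exists phi h, strict_incr phi /\ uc_conv (fun k => gn (psi (phi k))) h) ->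
  (forall z e, 0 < e -> exists N : nat, forall n, (N <= n)%nat -> Cmod (gn n z - g z) < e) ->
  uc_conv gn g.
Proof.
  intros Hsub Hpt. apply NNPP. intros Hn.
  destruct (not_uc_conv gn g Hn) as [r [e [Hr [He Hbad]]]].
  destruct (choice _ Hbad) as [c Hc].
  set (psi := iter_choice c).
  assert (Hpsi : strict_incr psi) by (intros k; unfold psi; simpl; destruct (Hc (S (iter_choice c k))); lia).
  destruct (Hsub psi Hpsi) as [phi [h [Hphi Hu]]].
  assert (Eh : h = g).
  { apply functional_extensionality. intros z. apply (uc_conv_pointwise _ h z (g z) Hu).
    intros e' He'. destruct (Hpt z e' He') as [N HN]. exists N. intros k Hk. apply HN.
    pose proof (strict_incr_ge phi Hphi k). pose proof (strict_incr_ge psi Hpsi (phi k)). lia. }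
  rewrite Eh in Hu. destruct (Hu r Hr e He) as [K HK].
  destruct (Hc (match phi K with O => O | S k' => S (psi k') end)) as [_ [z [Hz1 Hz2]]].
  replace (c (match phi K with O => O | S k' => S (psi k') end)) with (psi (phi K)) in Hz2
    by (unfold psi; destruct (phi K); reflexivity).
  specialize (HK K (le_n K) z Hz1). lra.
Qed.

Lemma dil_pointwise f (z : Dsk) : holo f -> forall e, 0 < e -> exists d, 0 < d /\
  forall s, 0 <= s < 1 -> 1 - s < d -> Cmod (dil s f z - f z) < e.
Proof.
  intros Hf e He. destruct (is_cderive_continuous _ _ _ (hder_cderive f z Hf) e He) as [d [Hd H]].
  exists d. split; auto. intros s Hs Hsd.
  unfold dil. rewrite <- (ext_proj1_sig f z). apply H.
  replace (RtoC s * proj1_sig z - proj1_sig z)%C with (RtoC (s - 1) * proj1_sig z)%C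
    by (unfold RtoC; apply injective_projections; simpl; ring).
  rewrite Cmod_mult, Cmod_R, Rabs_left1 by lra.
  pose proof (Cmod_proj1_sig_range z). nra.
Qed.

Lemma dil_uc_conv X nX Cst f (sn : nat -> R) : initial_space X nX ->
  (forall f r, X f -> 0 <= r < 1 -> X (dil r f) /\ nX (dil r f) <= Cst * nX f) -> X f ->
  (forall n, 0 <= sn n < 1) -> (forall e, 0 < e -> exists N : nat, forall n, (N <= n)%nat -> 1 - e < sn n) ->
  uc_conv (fun n => dil (sn n) f) f.
Proof.
  intros HI Hdil Hf Hs Hlim. apply uc_conv_of_subsequences.
  - intros psi _.
    destruct (initial_space_bounded_subseq X nX (fun k => dil (sn (psi k)) f) (Cst * nX f) HI)
      as [phi [h [Hphi [_ Hu]]]]; try (intros k; apply Hdil; auto).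
    exists phi, h. auto.
  - intros z e He. destruct (dil_pointwise f z (bs_holo _ _ (proj1 HI) f Hf) e He) as [d [Hd H]].
    destruct (Hlim d Hd) as [N HN]. exists N. intros n Hn. specialize (HN n Hn). apply H; auto; lra.
Qed.

Definition radius (n : nat) : R := 1 - / (INR n + 2).

Lemma radius_range n : 0 <= radius n < 1.
Proof.
  unfold radius. pose proof (pos_INR n).
  assert (0 < / (INR n + 2)) by (apply Rinv_0_lt_compat; lra).
  assert (/ (INR n + 2) <= / 2) by (apply Rinv_le_contravar; lra). lra.
Qed.

Lemma radius_subseq_to_1 phi : strict_incr phi ->
  forall e, 0 < e -> exists N : nat, forall n, (N <= n)%nat -> 1 - e < radius (phi n).
Proof.
  intros Hphi e He. destruct (archimed_cor1 e He) as [N [HN1 HN2]]. exists N. intros n Hn.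
  unfold radius. pose proof (strict_incr_ge phi Hphi n).
  assert (INR N <= INR (phi n)) by (apply le_INR; lia).
  assert (0 < INR N) by (apply lt_0_INR; lia).
  assert (/ (INR (phi n) + 2) <= / INR N) by (apply Rinv_le_contravar; lra). lra.
Qed.

(** * Weighted Bloch spaces and compactness of T *)

Lemma real_Lub_Rbar_ub (E : R -> Prop) B x : (forall y, E y -> y <= B) -> E x -> x <= real (Lub_Rbar E).
Proof.
  intros HB Hx. destruct (Lub_Rbar_correct E) as [Hu Hl].
  specialize (Hu x Hx). specialize (Hl (Finite B) HB).
  destruct (Lub_Rbar E); simpl in *; auto; contradiction.
Qed.

Lemma real_Lub_Rbar_le (E : R -> Prop) B x : (forall y, E y -> y <= B) -> E x -> real (Lub_Rbar E) <= B.
Proof.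
  intros HB Hx. destruct (Lub_Rbar_correct E) as [Hu Hl].
  specialize (Hu x Hx). specialize (Hl (Finite B) HB).
  destruct (Lub_Rbar E); simpl in *; auto; contradiction.
Qed.

Definition Bv_conv (v : Dsk -> R) (an : nat -> Dsk -> C) (g : Dsk -> C) : Prop :=
  forall eps, 0 < eps -> exists N : nat, forall n, (N <= n)%nat -> Bv_norm v (fsub (an n) g) < eps.

Section BlochSpace.

Variable v : Dsk -> R.
Hypothesis Hv : forall z, 0 < v z.

Lemma Bv_hder_le_norm h z : Bv v h -> v z * Cmod (hder h z) <= Bv_norm v h.
Proof.
  intros [_ [M HM]]. unfold Bv_norm. pose proof (Cmod_ge_0 (h D0)).
  assert (v z * Cmod (hder h z) <= real (Lub_Rbar (fun t => exists z, t = v z * Cmod (hder h z)))).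
  { apply (real_Lub_Rbar_ub _ M); [intros y [w ->]; apply HM | exists z; auto]. }
  lra.
Qed.

Lemma Bv_norm_le h B : (forall z, v z * Cmod (hder h z) <= B) -> Bv_norm v h <= Cmod (h D0) + B.
Proof.
  intros H. unfold Bv_norm. apply Rplus_le_compat_l.
  apply (real_Lub_Rbar_le _ B (v D0 * Cmod (hder h D0))); [intros y [w ->]; apply H | exists D0; auto].
Qed.

Lemma Bv_fsub a b : Bv v a -> Bv v b -> Bv v (fsub a b).
Proof.
  intros [Ha [Ma HMa]] [Hb [Mb HMb]]. split; [apply holo_fsub; auto|].
  exists (Ma + Mb). intros z. rewrite hder_fsub by auto.
  replace (hder a z - hder b z)%C with (hder a z + - hder b z)%C by ring.
  pose proof (Cmod_triangle (hder a z) (- hder b z)). rewrite Cmod_opp in H.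
  specialize (HMa z). specialize (HMb z). specialize (Hv z). nra.
Qed.

Lemma Bv_norm_fsub_hder a g z : Bv v a -> Bv v g ->
  v z * Cmod (hder a z - hder g z) <= Bv_norm v (fsub a g).
Proof.
  intros Ha Hg. rewrite <- hder_fsub by (apply Ha || apply Hg).
  apply Bv_hder_le_norm, Bv_fsub; auto.
Qed.

Lemma Bv0_closed (an : nat -> Dsk -> C) g : (forall n, Bv0 v (an n)) -> Bv v g -> Bv_conv v an g -> Bv0 v g.
Proof.
  intros Han Hg Hc. split; auto. intros e He.
  destruct (Hc (e/2) ltac:(lra)) as [N HN]. specialize (HN N (le_n N)).
  destruct (Han N) as [HaB Ha0]. destruct (Ha0 (e/2) ltac:(lra)) as [rho [Hrho Hr]].
  exists rho. split; auto. intros z Hz. specialize (Hr z Hz).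
  pose proof (Bv_norm_fsub_hder (an N) g z HaB Hg).
  pose proof (Cmod_le_sub (hder g z) (hder (an N) z)). rewrite Cmod_sub_sym in H0.
  specialize (Hv z). nra.
Qed.

Lemma Bv_conv_uc_conv_hder (an : nat -> Dsk -> C) g h : (forall n, Bv v (an n)) -> Bv v g -> holo h ->
  Bv_conv v an g -> uc_conv an h -> forall z, hder h z = hder g z.
Proof.
  intros Han Hg Hh Hc Hu z.
  assert (E : (hder h z - hder g z)%C = RtoC 0).
  { apply Cmod_small_eq0. intros e He.
    destruct (uc_conv_hder an h) with (rho := Cmod (proj1_sig z)) (eps := e / 4) as [N1 HN1];
      try apply Cmod_proj1_sig_range; try lra; auto; try (intros n; apply Han).
    destruct (Hc (e / 4 * v z)) as [N2 HN2]; [specialize (Hv z); nra|].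
    set (n := max N1 N2).
    specialize (HN1 n (Nat.le_max_l _ _) z (Rle_refl _)). specialize (HN2 n (Nat.le_max_r _ _)).
    pose proof (Bv_norm_fsub_hder (an n) g z (Han n) Hg).
    assert (Cmod (hder (an n) z - hder g z) < e / 4) by (specialize (Hv z); nra).
    pose proof (Cmod_sub_triangle (hder h z) (hder (an n) z) (hder g z)).
    rewrite Cmod_sub_sym in HN1. lra. }
  replace (hder h z) with ((hder h z - hder g z) + hder g z)%C by ring. rewrite E. ring.
Qed.

Lemma Bv_norm_tends_to_0 (an : nat -> Dsk -> C) : (forall z, v z <= 1) ->
  (forall n, holo (an n)) -> uc_conv an fzero ->
  (forall e, 0 < e -> exists rho, rho < 1 /\
     forall n z, rho < Cmod (proj1_sig z) -> v z * Cmod (hder (an n) z) <= e) ->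
  forall e, 0 < e -> exists N : nat, forall n, (N <= n)%nat -> Bv_norm v (an n) < e.
Proof.
  intros Hv1 Hh Hu Htail e He.
  destruct (Htail (e / 4)) as [rho [Hr1 Hr2]]; [lra|].
  set (rho' := Rmax rho 0).
  destruct (uc_conv_hder an fzero Hh holo_fzero Hu rho') with (eps := e / 4) as [N1 HN1].
  { split; [apply Rmax_r | apply Rmax_lub_lt; lra]. } { lra. }
  destruct (Hu 0 ltac:(lra) (e / 4) ltac:(lra)) as [N2 HN2].
  exists (max N1 N2). intros n Hn.
  assert (S1 : Cmod (an n D0) < e / 4).
  { specialize (HN2 n ltac:(lia) D0). unfold fzero in HN2.
    replace (an n D0 - 0)%C with (an n D0) in HN2 by ring. apply HN2. simpl. rewrite Cmod_0. lra. }
  assert (S2 : forall z, v z * Cmod (hder (an n) z) <= e / 4).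
  { intros z. destruct (Rle_dec (Cmod (proj1_sig z)) rho') as [Hz|Hz].
    - specialize (HN1 n ltac:(lia) z Hz). rewrite hder_fzero in HN1.
      replace (hder (an n) z - 0)%C with (hder (an n) z) in HN1 by ring.
      pose proof (Hv z). pose proof (Hv1 z). pose proof (Cmod_ge_0 (hder (an n) z)). nra.
    - apply Hr2. pose proof (Rmax_l rho 0). fold rho' in H. lra. }
  pose proof (Bv_norm_le (an n) (e / 4) S2). lra.
Qed.

End BlochSpace.

Lemma nX_fzero X nX : banach_subspace X nX -> nX fzero = 0.
Proof.
  intros Hb.
  assert (E : fscal (RtoC 0) fzero = fzero)
    by (apply functional_extensionality; intros z; unfold fscal, fzero; ring).
  rewrite <- E, (bs_norm_scal _ _ Hb), Cmod_0 by apply (bs_zero _ _ Hb). ring.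
Qed.

Definition adj_Kder_norm_vanishes (v : Dsk -> R) (X : (Dsk -> C) -> Prop) (nX : (Dsk -> C) -> R)
    (T : (Dsk -> C) -> (Dsk -> C)) : Prop :=
  forall eps, 0 < eps -> exists rho, rho < 1 /\
    forall z : Dsk, rho < Cmod (proj1_sig z) -> v z * adj_Kder_norm X nX T z < eps.

Section CompactOperator.

Variables (v : Dsk -> R) (X : (Dsk -> C) -> Prop) (nX : (Dsk -> C) -> R) (T : (Dsk -> C) -> (Dsk -> C)).
Hypotheses (Hv : forall z, 0 < v z) (HI : initial_space X nX) (HT : intrinsic T) (HB : bounded_op X nX v T).

Let Hb : banach_subspace X nX := proj1 HI.

Lemma hder_T_unit_ball_bound z : exists B, forall f, X f -> nX f <= 1 -> Cmod (hder (T f) z) <= B.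
Proof.
  destruct HB as [HBv [MT HMT]]. exists (Rabs MT / v z). intros f Hf Hn.
  pose proof (Bv_hder_le_norm v (T f) z (HBv f Hf)). pose proof (HMT f Hf).
  pose proof (bs_norm_ge0 _ _ Hb f Hf). pose proof (Hv z). pose proof (Rle_abs MT).
  assert (MT * nX f <= Rabs MT).
  { destruct (Rle_dec 0 MT); [rewrite Rabs_pos_eq by auto; nra | rewrite Rabs_left by lra; nra]. }
  apply Rmult_le_reg_l with (v z); auto. replace (v z * (Rabs MT / v z)) with (Rabs MT) by (field; lra). lra.
Qed.

Lemma adj_Kder_norm_ub f z : X f -> nX f <= 1 -> Cmod (hder (T f) z) <= adj_Kder_norm X nX T z.
Proof.
  intros Hf Hn. destruct (hder_T_unit_ball_bound z) as [B HB'].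
  apply (real_Lub_Rbar_ub _ B); [intros y [g [Hg [Hng ->]]]; auto | exists f; auto].
Qed.

Lemma adj_Kder_norm_le z B : (forall f, X f -> nX f <= 1 -> Cmod (hder (T f) z) <= B) ->
  adj_Kder_norm X nX T z <= B.
Proof.
  intros H. apply (real_Lub_Rbar_le _ B (Cmod (hder (T fzero) z))); [intros y [g [Hg [Hng ->]]]; auto|].
  exists fzero. repeat split; [apply (bs_zero _ _ Hb) | rewrite (nX_fzero X nX Hb); lra].
Qed.

Lemma hder_T_le_adj f z : X f -> Cmod (hder (T f) z) <= adj_Kder_norm X nX T z * nX f.
Proof.
  intros Hf. destruct HT as [HT1 [_ [HT3 _]]].
  destruct (Rle_lt_or_eq_dec 0 (nX f) (bs_norm_ge0 _ _ Hb f Hf)) as [Hp|E].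
  - (* apply the unit-ball bound to f / nX f *)
    set (c := / nX f). assert (Hc : 0 < c) by (apply Rinv_0_lt_compat; auto).
    assert (Hg : X (fscal (RtoC c) f)) by (apply (bs_scal _ _ Hb); auto).
    assert (Hhf : holo f) by (apply (bs_holo _ _ Hb); auto).
    assert (Hng : nX (fscal (RtoC c) f) <= 1).
    { rewrite (bs_norm_scal _ _ Hb), Cmod_R, Rabs_pos_eq by (auto; lra). unfold c.
      rewrite Rinv_l; lra. }
    pose proof (adj_Kder_norm_ub (fscal (RtoC c) f) z Hg Hng) as Hl.
    assert (HTcf : holo (fscal (RtoC c) (T f))) by (rewrite <- HT3 by auto; apply HT1, (bs_holo _ _ Hb), Hg).
    rewrite HT3, hder_fscal, Cmod_mult, Cmod_R, Rabs_pos_eq in Hl by (auto; lra).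
    apply Rmult_le_reg_l with c; [auto|].
    replace (c * (adj_Kder_norm X nX T z * nX f)) with (adj_Kder_norm X nX T z) by (unfold c; field; lra).
    auto.
  - rewrite <- E, Rmult_0_r.
    replace f with fzero by (symmetry; apply (bs_norm_eq0 _ _ Hb); auto).
    rewrite (intrinsic_fzero T HT), hder_fzero, Cmod_0. lra.
Qed.

Lemma compact_Bv0_compact_Bv : compact_op X nX v (Bv0 v) T -> compact_op X nX v (Bv v) T.
Proof.
  intros [Hc1 Hc2]. split; [intros f Hf; apply Hc1; auto|].
  intros fn Hfn Hbd. destruct (Hc2 fn Hfn Hbd) as [phi [g [H1 [H2 H3]]]].
  exists phi, g. repeat split; auto; apply H2.
Qed.

Section Dilations.

Variable Cst : R.
Hypothesis Hdil : forall f r, X f -> 0 <= r < 1 -> X (dil r f) /\ nX (dil r f) <= Cst * nX f.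
Hypothesis Hdil0 : forall f r, X f -> 0 <= r < 1 -> Bv0 v (T (dil r f)).

Lemma compact_Bv_maps_into_Bv0 : compact_op X nX v (Bv v) T -> forall f, X f -> Bv0 v (T f).
Proof.
  intros [Hc1 Hc2] f Hf.
  set (fn := fun n => dil (radius n) f).
  assert (Hfn : forall n, X (fn n)) by (intros n; apply Hdil; auto; apply radius_range).
  destruct (Hc2 fn Hfn) as [phi [g [Hphi [Hg Hconv]]]].
  { exists (Cst * nX f). intros n. apply Hdil; auto. apply radius_range. }
  assert (Hhol : forall n, holo (fn (phi n))) by (intros n; apply (bs_holo _ _ Hb); auto).
  assert (Hg0 : Bv0 v g).
  { apply (Bv0_closed v Hv (fun n => T (fn (phi n)))); auto.
    intros n. apply Hdil0; auto. apply radius_range. }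
  assert (Huc : uc_conv (fun n => T (fn (phi n))) (T f)).
  { apply intrinsic_uc_conv; auto; [apply (bs_holo _ _ Hb); auto|].
    apply (dil_uc_conv X nX Cst f (fun n => radius (phi n))); auto.
    - intros n. apply radius_range.
    - apply radius_subseq_to_1; auto. }
  assert (Eq : forall z, hder (T f) z = hder g z).
  { apply (Bv_conv_uc_conv_hder v Hv (fun n => T (fn (phi n)))); auto.
    apply (proj1 HT), (bs_holo _ _ Hb); auto. }
  split; [apply (proj1 HB); auto|]. intros e He.
  destruct (proj2 Hg0 e He) as [rho [Hr1 Hr2]].
  exists rho. split; auto. intros z Hz. rewrite Eq. auto.
Qed.

Lemma compact_Bv_compact_Bv0 : compact_op X nX v (Bv v) T -> compact_op X nX v (Bv0 v) T.
Proof.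
  intros Hc. pose proof (compact_Bv_maps_into_Bv0 Hc) as HBv0. destruct Hc as [Hc1 Hc2].
  split; auto. intros fn Hfn Hbd. destruct (Hc2 fn Hfn Hbd) as [phi [g [Hphi [Hg Hconv]]]].
  exists phi, g. split; [auto | split; [|exact Hconv]].
  apply (Bv0_closed v Hv (fun n => T (fn (phi n)))); [intros n; apply HBv0, Hfn | exact Hg | exact Hconv].
Qed.

End Dilations.

(* Otherwise there are f_n in the unit ball and |z_n| -> 1 with v(z_n) |(T f_n)'(z_n)| >= e, and the
   B_v0-limit g of a subsequence of the T f_n would have v(z) |g'(z)| >= e / 2 arbitrarily near the
   boundary. *)
Lemma compact_Bv0_uniform_tail : compact_op X nX v (Bv0 v) T ->
  forall e, 0 < e -> exists rho, rho < 1 /\ forall f z, X f -> nX f <= 1 ->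
    rho < Cmod (proj1_sig z) -> v z * Cmod (hder (T f) z) < e.
Proof.
  intros [Hc1 Hc2] e He. apply NNPP. intros Hn.
  assert (Hbad : forall n : nat, exists p : (Dsk -> C) * Dsk, X (fst p) /\ nX (fst p) <= 1 /\
    1 - / (INR n + 1) < Cmod (proj1_sig (snd p)) /\ e <= v (snd p) * Cmod (hder (T (fst p)) (snd p))).
  { intros n. apply NNPP. intros H'. apply Hn. exists (1 - / (INR n + 1)). split.
    - assert (0 < / (INR n + 1)) by (apply Rinv_0_lt_compat; pose proof (pos_INR n); lra). lra.
    - intros f z Hf Hnf Hz. apply Rnot_le_lt. intros Hge. apply H'. exists (f, z). auto. }
  destruct (choice _ Hbad) as [p Hp].
  destruct (Hc2 (fun n => fst (p n))) as [phi [g [Hphi [Hg Hconv]]]];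
    [intros n; apply Hp | exists 1; intros n; apply Hp|].
  destruct (proj2 Hg (e / 2) ltac:(lra)) as [rg [Hrg1 Hrg2]].
  destruct (Hconv (e / 2) ltac:(lra)) as [N1 HN1].
  destruct (archimed_cor1 (1 - rg) ltac:(lra)) as [N2 [HN2a HN2b]].
  set (m := phi (max N1 N2)).
  assert (Hm : (N2 <= m)%nat) by (pose proof (strict_incr_ge phi Hphi (max N1 N2)); unfold m; lia).
  destruct (Hp m) as [Z1 [Z2 [Z3 Z4]]].
  assert (Hzr : rg < Cmod (proj1_sig (snd (p m)))).
  { assert (INR N2 <= INR m) by (apply le_INR; auto). assert (0 < INR N2) by (apply lt_0_INR; lia).
    assert (/ (INR m + 1) <= / INR N2) by (apply Rinv_le_contravar; lra). lra. }
  specialize (Hrg2 _ Hzr). specialize (HN1 (max N1 N2) (Nat.le_max_l _ _)). fold m in HN1.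
  pose proof (Bv_norm_fsub_hder v Hv (T (fst (p m))) g (snd (p m)) (proj1 (Hc1 _ Z1)) (proj1 Hg)).
  pose proof (Cmod_le_sub (hder (T (fst (p m))) (snd (p m))) (hder g (snd (p m)))).
  pose proof (Hv (snd (p m))). nra.
Qed.

Lemma compact_Bv0_adj_tail : compact_op X nX v (Bv0 v) T -> adj_Kder_norm_vanishes v X nX T.
Proof.
  intros Hc e He. destruct (compact_Bv0_uniform_tail Hc (e / 2) ltac:(lra)) as [rho [Hr H]].
  exists rho. split; auto. intros z Hz. pose proof (Hv z).
  assert (adj_Kder_norm X nX T z <= e / 2 / v z).
  { apply adj_Kder_norm_le. intros f Hf Hn. specialize (H f z Hf Hn Hz).
    apply Rmult_le_reg_l with (v z); auto. replace (v z * (e / 2 / v z)) with (e / 2) by (field; lra). lra. }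
  apply Rmult_le_compat_l with (r := v z) in H1; [|lra].
  replace (v z * (e / 2 / v z)) with (e / 2) in H1 by (field; lra). lra.
Qed.

Lemma adj_tail_maps_into_Bv0 : adj_Kder_norm_vanishes v X nX T -> forall f, X f -> Bv0 v (T f).
Proof.
  intros H3 f Hf. split; [apply (proj1 HB); auto|]. intros e He.
  pose proof (bs_norm_ge0 _ _ Hb f Hf).
  destruct (H3 (e / (nX f + 1))) as [rho [Hr1 Hr2]]; [apply Rdiv_lt_0_compat; lra|].
  exists rho. split; auto. intros z Hz. specialize (Hr2 z Hz).
  pose proof (hder_T_le_adj f z Hf). pose proof (Hv z).
  apply Rle_lt_trans with (v z * adj_Kder_norm X nX T z * nX f); [rewrite Rmult_assoc; apply Rmult_le_compat_l; lra|].
  apply Rle_lt_trans with (e / (nX f + 1) * nX f); [apply Rmult_le_compat_r; lra|].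
  apply Rmult_lt_reg_r with (nX f + 1); [lra|].
  replace (e / (nX f + 1) * nX f * (nX f + 1)) with (e * nX f) by (field; lra). nra.
Qed.

Lemma adj_tail_uniform B (hn : nat -> Dsk -> C) : 0 < B -> adj_Kder_norm_vanishes v X nX T ->
  (forall n, X (hn n)) -> (forall n, nX (hn n) <= B) ->
  forall e, 0 < e -> exists rho, rho < 1 /\
    forall n z, rho < Cmod (proj1_sig z) -> v z * Cmod (hder (T (hn n)) z) <= e.
Proof.
  intros HB0 H3 Hhn Hnh e He. destruct (H3 (e / B)) as [rho [Hr1 Hr2]]; [apply Rdiv_lt_0_compat; lra|].
  exists rho. split; auto. intros n z Hz. specialize (Hr2 z Hz).
  pose proof (hder_T_le_adj (hn n) z (Hhn n)). pose proof (Hv z). pose proof (Hnh n).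
  pose proof (bs_norm_ge0 _ _ Hb _ (Hhn n)).
  assert (Hadj0 : 0 <= adj_Kder_norm X nX T z).
  { eapply Rle_trans; [apply Cmod_ge_0|]. apply (adj_Kder_norm_ub fzero z);
      [apply (bs_zero _ _ Hb) | rewrite (nX_fzero X nX Hb); lra]. }
  apply Rle_trans with (v z * adj_Kder_norm X nX T z * B).
  - rewrite Rmult_assoc. apply Rmult_le_compat_l; [lra|]. eapply Rle_trans; [eassumption|].
    apply Rmult_le_compat_l; lra.
  - apply Rmult_lt_compat_r with (r := B) in Hr2; [|lra].
    replace (e / B * B) with e in Hr2 by (field; lra). lra.
Qed.

Lemma adj_tail_compact_Bv0 : (forall z, v z <= 1) -> adj_Kder_norm_vanishes v X nX T ->
  compact_op X nX v (Bv0 v) T.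
Proof.
  intros Hv1 H3. split; [apply adj_tail_maps_into_Bv0; auto|].
  intros fn Hfn [M HM].
  destruct (initial_space_bounded_subseq X nX fn M HI Hfn HM) as [phi [f [Hphi [Hf Hu]]]].
  exists phi, (T f). split; auto. split; [apply adj_tail_maps_into_Bv0; auto|].
  set (hn := fun n => fsub (fn (phi n)) f).
  assert (Hhn : forall n, X (hn n))
    by (intros n; unfold hn; rewrite fsub_fadd; apply (bs_add _ _ Hb), (bs_scal _ _ Hb); auto).
  assert (Hhol : forall n, holo (hn n)) by (intros n; apply (bs_holo _ _ Hb); auto).
  set (B := M + nX f + 1).
  assert (HM0 : 0 <= M) by (pose proof (HM 0%nat); pose proof (bs_norm_ge0 _ _ Hb _ (Hfn 0%nat)); lra).
  assert (HB0 : 0 < B) by (pose proof (bs_norm_ge0 _ _ Hb f Hf); unfold B; lra).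
  assert (Hnh : forall n, nX (hn n) <= B).
  { intros n. unfold hn. rewrite fsub_fadd.
    eapply Rle_trans; [apply (bs_norm_tri _ _ Hb); auto; apply (bs_scal _ _ Hb); auto|].
    rewrite (bs_norm_scal _ _ Hb), Cmod_R, Rabs_left by (auto; lra).
    specialize (HM (phi n)). unfold B. lra. }
  assert (ETh : forall n, T (hn n) = fsub (T (fn (phi n))) (T f))
    by (intros n; apply intrinsic_fsub; auto; apply (bs_holo _ _ Hb); auto).
  intros e He. destruct (Bv_norm_tends_to_0 v Hv (fun n => T (hn n)) Hv1) with (e := e) as [N HN]; auto.
  - intros n. apply (proj1 HT); auto.
  - rewrite <- (intrinsic_fzero T HT). apply intrinsic_uc_conv; auto; [apply holo_fzero|].
    intros r Hr e' He'. destruct (Hu r Hr e' He') as [N HN]. exists N. intros n Hn z Hz.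
    unfold hn, fsub, fzero. replace (fn (phi n) z - f z - 0)%C with (fn (phi n) z - f z)%C by ring. auto.
  - apply (adj_tail_uniform B); auto.
  - exists N. intros n Hn. rewrite <- ETh. auto.
Qed.

End CompactOperator.

Theorem theorem3p4 (v : Dsk -> R) (X : (Dsk -> C) -> Prop) (nX : (Dsk -> C) -> R)
    (Cst : R) (T : (Dsk -> C) -> (Dsk -> C)) :
  typical_weight v ->
  initial_space X nX ->
  (forall f r, X f -> 0 <= r < 1 -> X (dil r f) /\ nX (dil r f) <= Cst * nX f) ->
  intrinsic T ->
  bounded_op X nX v T ->
  (forall f r, X f -> 0 <= r < 1 -> Bv0 v (T (dil r f))) ->
  (compact_op X nX v (Bv v) T <-> compact_op X nX v (Bv0 v) T) /\
  (compact_op X nX v (Bv0 v) T <->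
     (forall eps, 0 < eps -> exists rho, rho < 1 /\
        forall z : Dsk, rho < Cmod (proj1_sig z) -> v z * adj_Kder_norm X nX T z < eps)).
Proof.
  intros Hv HI Hdil HT HB Hdil0.
  destruct Hv as [_ [_ [Hv01 _]]].
  assert (Hv : forall z, 0 < v z) by apply Hv01.
  assert (Hv1 : forall z, v z <= 1) by apply Hv01.
  split; split.
  - apply (compact_Bv_compact_Bv0 v X nX T Hv HI HT HB Cst); auto.
  - apply (compact_Bv0_compact_Bv v X nX T).
  - apply (compact_Bv0_adj_tail v X nX T Hv HI).
  - apply (adj_tail_compact_Bv0 v X nX T Hv HI HT HB Hv1).
Qed.
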